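(* Let $\Gamma$ be a metric graph as described in the context. A function $u\colon\Gamma\to\mathbb{R}$ is convex if and only if $u$ is a viscosity sub-solution of the problem \[ u''=0 \text{ on the edges of }\Gamma,\qquad \min_{\mathrm{e},\bar{\mathrm{e}}\in\mathrm{E}_{\mathrm{v}}}\Big\{\frac{\partial u}{\partial x_{\mathrm{e}}}(\mathrm{v})+\frac{\partial u}{\partial x_{\bar{\mathrm{e}}}}(\mathrm{v})\Big\}=0 \text{ for interior vertices } \mathrm{v},\qquad u(\mathrm{v})=\lim_{x\to\mathrm{v}}u(x)\text{ for terminal vertices }\mathrm{v}. \]
   Context: $\Gamma$ is a metric graph: a finite, connected, simple graph with vertex set $\mathrm{V}$ and edge set $\mathrm{E}$ (bounded degrees $\ge1$), each edge $\mathrm{e}$ identified with an interval $[0,\ell_{\mathrm{e}}]$ via an orientation (initial vertex $\mathrm{e}_-$ at $0$, terminal vertex $\mathrm{e}_+$ at $\ell_{\mathrm{e}}$). $\Gamma$ is a connected compact metric space with path distance $d$, with $d(x,y)=|x-y|$ for points on the same edge; $[x,y]$ is the minimal path between $x$ and $y$. $\mathrm{E}_{\mathrm{v}}$ is the set of edges incident to $\mathrm{v}$; a vertex is interior if its degree exceeds $1$, terminal otherwise. The ingoing derivative at $\mathrm{v}$ along $\mathrm{e}$ is $\frac{\partial u}{\partial x_{\mathrm{e}}}(\mathrm{v})=u_{\mathrm{e}}'(\mathrm{v})$ if $\mathrm{v}=\mathrm{e}_-$ and $-u_{\mathrm{e}}'(\mathrm{v})$ if $\mathrm{v}=\mathrm{e}_+$.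 A function $u$ is convex if $u(z)\le\frac{d(y,z)}{d(x,y)}u(x)+\frac{d(x,z)}{d(x,y)}u(y)$ for all $x,y\in\Gamma$ and $z\in[x,y]$. An upper semicontinuous $u$ is a viscosity sub-solution of the problem if: for every $x_0\in\Gamma\setminus\mathrm{V}$, $\delta>0$ and $\varphi\in C^2(x_0-\delta,x_0+\delta)$ with $\varphi(x_0)=u(x_0)$ and $\varphi\ge u$ on $(x_0-\delta,x_0+\delta)$, one has $\varphi''(x_0)\ge0$; and for every interior vertex $\mathrm{v}$, $\mathrm{e},\bar{\mathrm{e}}\in\mathrm{E}_{\mathrm{v}}$ and $\varphi\in C^1(\mathrm{e}\cup\bar{\mathrm{e}})$ with $\varphi(\mathrm{v})=u(\mathrm{v})$ and $\varphi\ge u$ on $\mathrm{e}\cup\bar{\mathrm{e}}$, one has $\frac{\partial \varphi}{\partial x_{\mathrm{e}}}(\mathrm{v})+\frac{\partial \varphi}{\partial x_{\bar{\mathrm{e}}}}(\mathrm{v})\ge0$. *)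

From Stdlib Require Import Reals Lra.
From Coquelicot Require Import Coquelicot.
Open Scope R_scope.

(* A finite (combinatorial) graph with oriented edges and edge lengths.
   Vertices are 0..nV-1, edges 0..nE-1; edge e goes from src e (coordinate 0)
   to tgt e (coordinate len e). *)
Record graph_data := MkGraph {
  nV : nat;
  nE : nat;
  src : nat -> nat;
  tgt : nat -> nat;
  len : nat -> R
}.

(* Points of the metric graph: a vertex, or an interior point of an edge
   given by its coordinate t in (0, len e). *)
Inductive point :=
| PV (v : nat)
| PE (e : nat) (t : R).

Definition valid_point (G : graph_data) (x : point) : Prop :=
  match x with
  | PV v => (v < nV G)%nat
  | PE e t => (e < nE G)%nat /\ 0 < t < len G e
  end.

Definition pt (G : graph_data) (e : nat) (t : R) : point :=
  if Rle_dec t 0 then PV (src G e)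
  else if Rle_dec (len G e) t then PV (tgt G e)
  else PE e t.

Definition incident (G : graph_data) (v e : nat) : Prop :=
  (e < nE G)%nat /\ (src G e = v \/ tgt G e = v).

Inductive walk (G : graph_data) : nat -> nat -> R -> Prop :=
| walk_nil v : (v < nV G)%nat -> walk G v v 0
| walk_cons v w e r :
    (e < nE G)%nat ->
    src G e = v -> walk G (tgt G e) w r -> walk G v w (len G e + r)
| walk_cons_rev v w e r :
    (e < nE G)%nat ->
    tgt G e = v -> walk G (src G e) w r -> walk G v w (len G e + r).

Definition exit_to (G : graph_data) (x : point) (v : nat) (a : R) : Prop :=
  match x with
  | PV w => v = w /\ a = 0
  | PE e t => (v = src G e /\ a = t) \/ (v = tgt G e /\ a = len G e - t)
  end.

Definition path_length (G : graph_data) (x y : point) (r : R) : Prop :=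
  (exists vx vy a b r', exit_to G x vx a /\ exit_to G y vy b /\
                        walk G vx vy r' /\ r = a + r' + b)
  \/ (exists e t s, x = PE e t /\ y = PE e s /\ r = Rabs (t - s)).

Definition dist (G : graph_data) (x y : point) : R :=
  real (Glb_Rbar (path_length G x y)).

(* Standing assumptions on a metric graph: finite, connected, simple,
   degrees >= 1, positive lengths, and d(x,y) = |x - y| on a common edge. *)
Definition is_metric_graph (G : graph_data) : Prop :=
  (forall e, (e < nE G)%nat ->
     (src G e < nV G)%nat /\ (tgt G e < nV G)%nat /\ src G e <> tgt G e
     /\ 0 < len G e) /\
  (forall e f, (e < nE G)%nat -> (f < nE G)%nat ->
     ((src G e = src G f /\ tgt G e = tgt G f) \/
      (src G e = tgt G f /\ tgt G e = src G f)) -> e = f) /\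
  (forall v, (v < nV G)%nat -> exists e, incident G v e) /\
  (forall v w, (v < nV G)%nat -> (w < nV G)%nat -> exists r, walk G v w r) /\
  (forall e t s, (e < nE G)%nat -> 0 <= t <= len G e -> 0 <= s <= len G e ->
     dist G (pt G e t) (pt G e s) = Rabs (t - s)).

(* z belongs to [x,y]: z lies on a minimal path from x to y. *)
Definition in_segment (G : graph_data) (x y z : point) : Prop :=
  dist G x z + dist G z y = dist G x y.

Definition convex_on_graph (G : graph_data) (u : point -> R) : Prop :=
  forall x y z, valid_point G x -> valid_point G y -> valid_point G z ->
    x <> y -> in_segment G x y z ->
    u z <= dist G y z / dist G x y * u x + dist G x z / dist G x y * u y.

Definition usc_on_graph (G : graph_data) (u : point -> R) : Prop :=
  forall x, valid_point G x -> forall eps, 0 < eps ->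
    exists delta, 0 < delta /\
      forall y, valid_point G y -> dist G x y < delta -> u y < u x + eps.

Definition C2_on (a b : R) (phi phi1 phi2 : R -> R) : Prop :=
  forall t, a < t < b ->
    is_derive phi t (phi1 t) /\ is_derive phi1 t (phi2 t) /\ continuous phi2 t.

Definition C1_on_closed (a b : R) (phi phi1 : R -> R) : Prop :=
  forall t, a <= t <= b -> is_derive phi t (phi1 t) /\ continuous phi1 t.

Definition interior_vertex (G : graph_data) (v : nat) : Prop :=
  (v < nV G)%nat /\ exists e f, e <> f /\ incident G v e /\ incident G v f.

Definition ingoing_deriv (G : graph_data) (v e : nat) (phi1 : R -> R) : R :=
  if Nat.eq_dec (src G e) v then phi1 0 else - phi1 (len G e).

Definition vcoord (G : graph_data) (v e : nat) : R :=
  if Nat.eq_dec (src G e) v then 0 else len G e.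

Definition viscosity_subsolution (G : graph_data) (u : point -> R) : Prop :=
  usc_on_graph G u /\
  (forall e t0 delta, (e < nE G)%nat -> 0 < t0 < len G e -> 0 < delta ->
     0 <= t0 - delta -> t0 + delta <= len G e ->
     forall phi phi1 phi2, C2_on (t0 - delta) (t0 + delta) phi phi1 phi2 ->
       phi t0 = u (PE e t0) ->
       (forall t, t0 - delta < t < t0 + delta -> u (PE e t) <= phi t) ->
       0 <= phi2 t0) /\
  (forall v e f, interior_vertex G v -> incident G v e -> incident G v f ->
     e <> f ->
     forall phie phie1 phif phif1,
       C1_on_closed 0 (len G e) phie phie1 ->
       C1_on_closed 0 (len G f) phif phif1 ->
       phie (vcoord G v e) = u (PV v) -> phif (vcoord G v f) = u (PV v) ->
       (forall t, 0 <= t <= len G e -> u (pt G e t) <= phie t) ->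
       (forall t, 0 <= t <= len G f -> u (pt G f t) <= phif t) ->
       0 <= ingoing_deriv G v e phie1 + ingoing_deriv G v f phif1).

(* Convex functions are sub-solutions: at an interior point, a C^2 function touching [u]
   from above with negative second derivative would put [u t0] above the average of
   [u (t0 - h)] and [u (t0 + h)]; at a vertex [v], the points at distance [h] from [v] on
   two incident edges have [v] as midpoint, and convexity bounds the sum of the two ingoing
   derivatives from below. Upper semicontinuity comes from a one-sided Lipschitz bound
   along the edges.

   Sub-solutions are convex: for [z] on a minimal path from [x] to [y], near-optimal
   paths from [x] to [z] and from [z] to [y] join into a path that never backtracks. Along
   it, [u] becomes an upper semicontinuous function of arclength which passes the
   quadratic touching test at edge points and, where the path changes edges at a vertex,
   the corner test coming from the vertex condition. Such a function lies below its
   chord (perturb the chord by a strictly concave function with concave corners at the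
   vertices and look at a maximum of the difference), and letting the slack go to zero
   gives the convexity inequality. *)

From Stdlib Require Import Reals Lra Lia List Classical.
From Coquelicot Require Import Coquelicot.
Open Scope R_scope.

(** * A maximum principle on an interval *)

Definition usc_on (g : R -> R) (a b : R) : Prop :=
  forall s, a <= s <= b -> forall eps, 0 < eps -> exists delta, 0 < delta /\
    forall s', a <= s' <= b -> Rabs (s' - s) < delta -> g s' < g s + eps.

Lemma is_lub_approx (E : R -> Prop) (c d : R) :
  is_lub E c -> 0 < d -> exists t, E t /\ c - d < t /\ t <= c.
Proof.
  intros [Hub Hl] Hd.
  destruct (classic (exists t, E t /\ c - d < t)) as [[t [Et Ht]]|Hn].
  - exists t; repeat split; auto.
  - assert (c <= c - d); [|lra]. apply Hl. intros t Et.
    destruct (Rle_lt_dec t (c - d)); auto. exfalso; apply Hn; eauto.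
Qed.

Lemma usc_on_bounded g a b : a <= b -> usc_on g a b ->
  exists M, forall s, a <= s <= b -> g s <= M.
Proof.
  intros Hab Hu.
  set (A := fun t => a <= t <= b /\ exists M, forall s, a <= s <= t -> g s <= M).
  assert (HA : A a). { split; [lra|]. exists (g a). intros s Hs. replace s with a by lra; lra. }
  assert (Hb : bound A). { exists b. intros t [Ht _]; lra. }
  destruct (completeness A Hb (ex_intro _ a HA)) as [c Hc].
  assert (Hac : a <= c) by (apply Hc; auto).
  assert (Hcb : c <= b) by (apply Hc; intros t [Ht _]; lra).
  destruct (Hu c (conj Hac Hcb) 1 Rlt_0_1) as [d [Hd Hud]].
  destruct (is_lub_approx A c d Hc Hd) as [t [[Ht [Mt HMt]] [Htd Htc]]].
  set (t' := Rmin b (c + d/2)).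
  assert (HAt' : A t').
  { split. unfold t'; unfold Rmin; destruct Rle_dec; lra.
    exists (Rmax Mt (g c + 1)). intros s Hs.
    destruct (Rle_lt_dec s t).
    - eapply Rle_trans; [apply HMt; lra| apply Rmax_l].
    - eapply Rle_trans; [|apply Rmax_r]. left. apply Hud.
      + unfold t' in Hs; unfold Rmin in Hs; destruct Rle_dec; lra.
      + unfold t' in Hs; unfold Rmin in Hs; destruct Rle_dec; split_Rabs; lra. }
  assert (Ht'c : t' <= c) by (apply Hc; auto).
  assert (Hcb' : c = b) by (unfold t' in Ht'c; unfold Rmin in Ht'c; destruct Rle_dec; lra).
  destruct HAt' as [_ [M HM]]. exists M. intros s Hs. apply HM.
  unfold t'; unfold Rmin; destruct Rle_dec; lra.
Qed.

Lemma usc_on_attains_max g a b : a <= b -> usc_on g a b ->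
  exists c, a <= c <= b /\ forall s, a <= s <= b -> g s <= g c.
Proof.
  intros Hab Hu.
  destruct (usc_on_bounded g a b Hab Hu) as [M0 HM0].
  set (I := fun y => exists s, a <= s <= b /\ y = g s).
  assert (HbI : bound I). { exists M0. intros y [s [Hs ->]]. auto. }
  destruct (completeness I HbI
      (ex_intro _ (g a) (ex_intro _ a (conj (conj (Rle_refl a) Hab) eq_refl))))
    as [Ms HMs].
  assert (Hle : forall s, a <= s <= b -> g s <= Ms) by (intros s Hs; apply HMs; exists s; auto).
  assert (Happ : forall eps, 0 < eps -> exists s, a <= s <= b /\ g s > Ms - eps).
  { intros eps He. destruct (is_lub_approx I Ms eps HMs He) as [y [[s [Hs ->]] [Hy _]]].
    exists s; split; auto; lra. }
  (* [c] is the rightmost point near which [g] comes arbitrarily close to its supremum *)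
  set (B := fun t => a <= t <= b /\
              forall eps, 0 < eps -> exists s, t <= s <= b /\ g s > Ms - eps).
  assert (HB : B a).
  { split; [lra|]. intros eps He. destruct (Happ eps He) as [s [Hs Hg]].
    exists s; split; [lra|auto]. }
  assert (HbB : bound B). { exists b. intros t [Ht _]; lra. }
  destruct (completeness B HbB (ex_intro _ a HB)) as [c Hc].
  assert (Hac : a <= c) by (apply Hc; auto).
  assert (Hcb : c <= b) by (apply Hc; intros t [Ht _]; lra).
  exists c; split; [lra|]. intros s Hs.
  assert (Ms <= g c); [|specialize (Hle s Hs); lra].
  destruct (Rle_lt_dec Ms (g c)) as [|Hlt]; auto. exfalso.
  set (e0 := (Ms - g c)/2).
  assert (He0 : 0 < e0) by (unfold e0; lra).
  destruct (Hu c (conj Hac Hcb) e0 He0) as [d [Hd Hud]].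
  destruct (is_lub_approx B c d Hc Hd) as [t [[Ht HBt] [Htd Htc]]].
  assert (Hfar : forall eps, 0 < eps -> eps <= e0 ->
            exists s, c + d <= s <= b /\ g s > Ms - eps).
  { intros eps He Hee. destruct (HBt eps He) as [s' [Hs' Hg]]. exists s'. split; [|auto].
    split; [|lra]. destruct (Rle_lt_dec (c + d) s'); auto. exfalso.
    assert (g s' < g c + e0) by (apply Hud; [lra|split_Rabs; lra]).
    unfold e0 in *; lra. }
  assert (HBc : B (c + d/2)).
  { destruct (Hfar e0 He0 (Rle_refl _)) as [s1 [Hs1 _]].
    split; [lra|]. intros eps He.
    destruct (Hfar (Rmin eps e0)) as [s2 [Hs2 Hg2]].
    { unfold Rmin; destruct Rle_dec; lra. }
    { apply Rmin_r. }
    exists s2. split; [lra|]. pose proof (Rmin_l eps e0). lra. }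
  assert (c + d/2 <= c) by (apply Hc; auto). lra.
Qed.

Lemma usc_on_sub_lipschitz f q a b K : 0 <= K -> usc_on f a b ->
  (forall s s', a <= s <= b -> a <= s' <= b -> Rabs (q s' - q s) <= K * Rabs (s' - s)) ->
  usc_on (fun s => f s - q s) a b.
Proof.
  intros HK Hu Hq s Hs eps He. destruct (Hu s Hs (eps/2)) as [d [Hd Hud]]; [lra|].
  exists (Rmin d (eps / (2 * (K + 1)))). split.
  { apply Rmin_pos; auto. apply Rdiv_lt_0_compat; lra. }
  intros s' Hs' Hss.
  pose proof (Rmin_l d (eps / (2 * (K + 1)))). pose proof (Rmin_r d (eps / (2 * (K + 1)))).
  assert (H1 : f s' < f s + eps / 2) by (apply Hud; auto; lra).
  assert (H2 : Rabs (q s' - q s) < eps / 2).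
  { eapply Rle_lt_trans; [apply Hq; auto|].
    apply (Rle_lt_trans _ ((K + 1) * Rabs (s' - s))); [pose proof (Rabs_pos (s' - s)); nra|].
    apply (Rmult_lt_reg_r (/ (K + 1))); [apply Rinv_0_lt_compat; lra|].
    replace ((K + 1) * Rabs (s' - s) * / (K + 1)) with (Rabs (s' - s)) by (field; lra).
    replace (eps / 2 * / (K + 1)) with (eps / (2 * (K + 1))) by (field; lra). lra. }
  split_Rabs; lra.
Qed.

(* Concave, with a corner at each [sk]. *)
Fixpoint tents (L : R) (S : list R) (s : R) : R :=
  match S with
  | nil => 0
  | sk :: S' => Rmin (s * (L - sk)) (sk * (L - s)) + tents L S' s
  end.

Fixpoint tents_lip (L : R) (S : list R) : R :=
  match S with nil => 0 | sk :: S' => Rabs (L - sk) + Rabs sk + tents_lip L S' end.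

Lemma tents_lip_ge0 L S : 0 <= tents_lip L S.
Proof. induction S; simpl; [lra|]. pose proof (Rabs_pos (L - a)); pose proof (Rabs_pos a); lra. Qed.

Lemma tents_lipschitz L S s s' : Rabs (tents L S s - tents L S s') <= tents_lip L S * Rabs (s - s').
Proof.
  induction S as [|sk S IH]; simpl.
  - rewrite Rminus_0_r, Rabs_R0; lra.
  - assert (H1 : Rabs (Rmin (s * (L - sk)) (sk * (L - s)) - Rmin (s' * (L - sk)) (sk * (L - s')))
                 <= Rabs (s * (L - sk) - s' * (L - sk)) + Rabs (sk * (L - s) - sk * (L - s'))).
    { unfold Rmin. destruct (Rle_dec (s * (L - sk)) (sk * (L - s)));
      destruct (Rle_dec (s' * (L - sk)) (sk * (L - s'))); split_Rabs; lra. }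
    replace (s * (L - sk) - s' * (L - sk)) with ((L - sk) * (s - s')) in H1 by ring.
    replace (sk * (L - s) - sk * (L - s')) with ((- sk) * (s - s')) in H1 by ring.
    rewrite !Rabs_mult, Rabs_Ropp in H1.
    eapply Rle_trans; [|right; ring_simplify; reflexivity].
    replace (Rmin (s * (L - sk)) (sk * (L - s)) + tents L S s -
      (Rmin (s' * (L - sk)) (sk * (L - s')) + tents L S s')) with
      ((Rmin (s * (L - sk)) (sk * (L - s)) - Rmin (s' * (L - sk)) (sk * (L - s')))
       + (tents L S s - tents L S s')) by ring.
    eapply Rle_trans; [apply Rabs_triang|]. nra.
Qed.

Lemma tents_0 L S : List.Forall (fun sk => 0 <= sk <= L) S -> tents L S 0 = 0.
Proof. induction 1; simpl; auto. rewrite IHForall. unfold Rmin; destruct Rle_dec; nra. Qed.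

Lemma tents_L L S : List.Forall (fun sk => 0 <= sk <= L) S -> tents L S L = 0.
Proof. induction 1; simpl; auto. rewrite IHForall. unfold Rmin; destruct Rle_dec; nra. Qed.

Lemma tents_support L S c : 0 < L -> exists aL bL aR bR,
  (forall s, tents L S s <= aL + bL * s) /\ (forall s, tents L S s <= aR + bR * s) /\
  tents L S c = aL + bL * c /\ tents L S c = aR + bR * c /\ bR <= bL /\
  (In c S -> bR + L <= bL).
Proof.
  intros HL. induction S as [|sk S IH]; simpl.
  - exists 0, 0, 0, 0. repeat split; intros; simpl in *; try lra; try contradiction.
  - destruct IH as [aL [bL [aR [bR [H1 [H2 [H3 [H4 [H5 H6]]]]]]]]].
    assert (HA : forall s, Rmin (s * (L - sk)) (sk * (L - s)) <= s * (L - sk)) by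
        (intros; apply Rmin_l).
    assert (HB : forall s, Rmin (s * (L - sk)) (sk * (L - s)) <= sk * (L - s)) by
        (intros; apply Rmin_r).
    destruct (Rtotal_order c sk) as [Hlt|[Heq|Hgt]].
    + assert (Hm : Rmin (c * (L - sk)) (sk * (L - c)) = c * (L - sk)) by (apply Rmin_left; nra).
      exists aL, (bL + (L - sk)), aR, (bR + (L - sk)). repeat split.
      * intros s. specialize (H1 s); specialize (HA s); nra.
      * intros s. specialize (H2 s); specialize (HA s); nra.
      * rewrite Hm, H3; ring.
      * rewrite Hm, H4; ring.
      * lra.
      * intros [E|E]; [lra|]. specialize (H6 E); lra.
    + subst sk.
      assert (Hm : Rmin (c * (L - c)) (c * (L - c)) = c * (L - c)) by (apply Rmin_left; lra).
      exists aL, (bL + (L - c)), (aR + c * L), (bR - c). repeat split.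
      * intros s. specialize (H1 s); specialize (HA s); nra.
      * intros s. specialize (H2 s); specialize (HB s); nra.
      * rewrite Hm, H3; ring.
      * rewrite Hm, H4; ring.
      * lra.
      * intros _. lra.
    + assert (Hm : Rmin (c * (L - sk)) (sk * (L - c)) = sk * (L - c)) by (apply Rmin_right; nra).
      exists (aL + sk * L), (bL - sk), (aR + sk * L), (bR - sk). repeat split.
      * intros s. specialize (H1 s); specialize (HB s); nra.
      * intros s. specialize (H2 s); specialize (HB s); nra.
      * rewrite Hm, H3; ring.
      * rewrite Hm, H4; ring.
      * lra.
      * intros [E|E]; [lra|]. specialize (H6 E); lra.
Qed.

(* Viscosity tests with quadratic test functions touching [f] from above at [s0]: the
   curvature test of an edge point and the slope-sum test of a vertex. *)
Definition touch_test (f : R -> R) (L s0 : R) : Prop :=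
  forall C beta,
    (forall s, 0 <= s <= L -> f s <= f s0 + beta * (s - s0) + C * (s - s0)^2) -> 0 <= C.

Definition corner_test (f : R -> R) (L s0 : R) : Prop :=
  forall C bL bR,
    (forall s, s0 <= s <= L -> f s <= f s0 + bR * (s - s0) + C * (s - s0)^2) ->
    (forall s, 0 <= s <= s0 -> f s <= f s0 + bL * (s0 - s) + C * (s - s0)^2) ->
    0 <= bL + bR.

Definition bent_chord (L A B ep et : R) (S : list R) (s : R) : R :=
  A + s / L * (B - A) + ep * (s * (L - s)) + et * tents L S s.

Lemma bent_chord_lipschitz L A B ep et S s s' : 0 < L -> 0 <= ep -> 0 <= et ->
  0 <= s <= L -> 0 <= s' <= L ->
  Rabs (bent_chord L A B ep et S s' - bent_chord L A B ep et S s)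
  <= (Rabs (B - A) / L + ep * L + et * tents_lip L S) * Rabs (s' - s).
Proof.
  intros HL Hep Het Hs Hs'. unfold bent_chord.
  pose proof (tents_lipschitz L S s' s) as HK.
  replace (A + s' / L * (B - A) + ep * (s' * (L - s')) + et * tents L S s' -
    (A + s / L * (B - A) + ep * (s * (L - s)) + et * tents L S s)) with
    ((s' - s) * ((B - A) / L) + ep * ((s' - s) * (L - s - s')) + et * (tents L S s' - tents L S s))
    by (field; lra).
  eapply Rle_trans; [apply Rabs_triang|].
  eapply Rle_trans; [apply Rplus_le_compat_r; apply Rabs_triang|].
  rewrite !Rabs_mult. unfold Rdiv. rewrite Rabs_mult.
  rewrite (Rabs_right ep), (Rabs_right et), Rabs_inv, (Rabs_right L) by lra.
  assert (Rabs (L - s - s') <= L) by (split_Rabs; lra).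
  pose proof (Rabs_pos (s' - s)). pose proof (Rabs_pos (B - A)).
  assert (0 <= / L) by (left; apply Rinv_0_lt_compat; lra).
  assert (ep * (Rabs (s' - s) * Rabs (L - s - s')) <= ep * (L * Rabs (s' - s)))
    by (apply Rmult_le_compat_l; [lra|]; nra).
  assert (et * Rabs (tents L S s' - tents L S s) <= et * (tents_lip L S * Rabs (s' - s)))
    by (apply Rmult_le_compat_l; lra).
  nra.
Qed.

Lemma bent_chord_support L A B ep et S c : 0 < L -> 0 <= et -> exists bL bR,
  (forall s, bent_chord L A B ep et S s
             <= bent_chord L A B ep et S c + bL * (s - c) - ep * (s - c)^2) /\
  (forall s, bent_chord L A B ep et S s
             <= bent_chord L A B ep et S c + bR * (s - c) - ep * (s - c)^2) /\
  (In c S -> bR + et * L <= bL).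
Proof.
  intros HL Het.
  destruct (tents_support L S c HL) as [aL [bL [aR [bR [H1 [H2 [H3 [H4 [_ H6]]]]]]]]].
  set (b0 := (B - A) / L + ep * (L - 2 * c)).
  assert (Hline : forall a b, tents L S c = a + b * c -> (forall s, tents L S s <= a + b * s) ->
            forall s, bent_chord L A B ep et S s
                      <= bent_chord L A B ep et S c + (b0 + et * b) * (s - c) - ep * (s - c)^2).
  { intros a b Hc Hb s. specialize (Hb s). unfold bent_chord, b0. rewrite Hc.
    assert (et * tents L S s <= et * (a + b * s)) by (apply Rmult_le_compat_l; lra).
    assert (E : A + s / L * (B - A) + ep * (s * (L - s)) + et * (a + b * s) =
       A + c / L * (B - A) + ep * (c * (L - c)) + et * (a + b * c) +
       ((B - A) / L + ep * (L - 2 * c) + et * b) * (s - c) - ep * (s - c) ^ 2) by (field; lra).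
    lra. }
  exists (b0 + et * bL), (b0 + et * bR). split; [|split].
  - exact (Hline aL bL H3 H1).
  - exact (Hline aR bR H4 H2).
  - intros Hin. specialize (H6 Hin). nra.
Qed.

Lemma small_bend L S z gap : 0 < gap ->
  exists ep et, 0 < ep /\ 0 < et /\ ep * (z * (L - z)) + et * tents L S z < gap.
Proof.
  intros Hgap. set (N := Rabs (z * (L - z)) + Rabs (tents L S z) + 1).
  pose proof (Rabs_pos (z * (L - z))). pose proof (Rabs_pos (tents L S z)).
  pose proof (Rle_abs (z * (L - z))). pose proof (Rle_abs (tents L S z)).
  assert (HN : 0 < N) by (unfold N; lra).
  exists (gap / N), (gap / N).
  assert (Hpos : 0 < gap / N) by (apply Rdiv_lt_0_compat; lra).
  split; [auto|split; [auto|]].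
  assert (gap / N * N = gap) by (field; lra).
  assert (gap / N * (z * (L - z)) + gap / N * tents L S z <= gap / N * (N - 1)).
  { rewrite <- Rmult_plus_distr_l. apply Rmult_le_compat_l; [lra|]. unfold N; lra. }
  nra.
Qed.

Lemma chord_bound_of_tests (f : R -> R) (L : R) (S : list R) :
  0 < L -> List.Forall (fun sk => 0 <= sk <= L) S -> usc_on f 0 L ->
  (forall s0, 0 < s0 < L -> touch_test f L s0 \/ (In s0 S /\ corner_test f L s0)) ->
  forall z, 0 <= z <= L -> f z <= (1 - z / L) * f 0 + (z / L) * f L.
Proof.
  intros HL HS Hu Htest z Hz.
  set (l := f 0 + z / L * (f L - f 0)).
  replace ((1 - z / L) * f 0 + z / L * f L) with l by (unfold l; field; lra).
  destruct (Rle_lt_dec (f z) l) as [|Hgt]; auto. exfalso.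
  destruct (small_bend L S z (f z - l) ltac:(lra)) as [ep [et [Hep [Het Hbend]]]].
  set (q := bent_chord L (f 0) (f L) ep et S).
  set (g := fun s => f s - q s).
  assert (Hg0 : g 0 = 0) by (unfold g, q, bent_chord; rewrite tents_0 by auto; field; lra).
  assert (HgL : g L = 0) by (unfold g, q, bent_chord; rewrite tents_L by auto; field; lra).
  assert (Hgz : 0 < g z) by (unfold g, q, bent_chord, l in *; lra).
  assert (Hgu : usc_on g 0 L).
  { apply (usc_on_sub_lipschitz f q 0 L
      (Rabs (f L - f 0) / L + ep * L + et * tents_lip L S)); auto.
    - pose proof (tents_lip_ge0 L S). pose proof (Rabs_pos (f L - f 0)).
      assert (0 <= Rabs (f L - f 0) / L)
        by (apply Rmult_le_pos; [lra|left; apply Rinv_0_lt_compat; lra]).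
      nra.
    - intros s s' Hs Hs'. apply bent_chord_lipschitz; auto; lra. }
  destruct (usc_on_attains_max g 0 L (Rlt_le _ _ HL) Hgu) as [c [Hc Hmax]].
  assert (Hgc : 0 < g c) by (specialize (Hmax z Hz); lra).
  assert (Hc0 : 0 < c < L).
  { split; [destruct (Req_dec c 0) as [E|E]; [rewrite E, Hg0 in Hgc; lra|lra]
           |destruct (Req_dec c L) as [E|E]; [rewrite E, HgL in Hgc; lra|lra]]. }
  (* At the maximum [c], [f] is touched from above by [q + g c], which is strictly concave
     and has corners only at points of [S]: both tests fail there. *)
  assert (Hfq : forall s, 0 <= s <= L -> f s <= f c + (q s - q c)).
  { intros s Hs. specialize (Hmax s Hs). unfold g in Hmax. lra. }
  destruct (bent_chord_support L (f 0) (f L) ep et S c HL (Rlt_le _ _ Het))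
    as [bL [bR [HbL [HbR Hcorner]]]]. fold q in HbL, HbR.
  destruct (Htest c Hc0) as [Htouch|[Hin Hcorn]].
  - assert (0 <= - ep); [|lra].
    apply (Htouch (- ep) bL). intros s Hs. specialize (Hfq s Hs). specialize (HbL s). lra.
  - specialize (Hcorner Hin).
    assert (0 <= (- bL) + bR); [|nra].
    apply (Hcorn (- ep)).
    + intros s Hs. specialize (Hfq s ltac:(lra)). specialize (HbR s). lra.
    + intros s Hs. specialize (Hfq s ltac:(lra)). specialize (HbL s). lra.
Qed.

(** * Elementary real analysis *)

Lemma Glb_Rbar_nonneg_real (E : R -> Prop) : (exists r, E r) -> (forall r, E r -> 0 <= r) ->
  0 <= real (Glb_Rbar E) /\ (forall r, E r -> real (Glb_Rbar E) <= r) /\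
  (forall eps, 0 < eps -> exists r, E r /\ r < real (Glb_Rbar E) + eps) /\
  (forall c, (forall r, E r -> c <= r) -> c <= real (Glb_Rbar E)).
Proof.
  intros [r0 Hr0] Hpos. destruct (Glb_Rbar_correct E) as [Hlb Hgr].
  destruct (Glb_Rbar E) as [g| |] eqn:Eg.
  - simpl. assert (Hlb' : forall r, E r -> g <= r) by (intros r Hr; apply (Hlb r Hr)).
    assert (Hgr' : forall c, (forall r, E r -> c <= r) -> c <= g).
    { intros c Hc. apply (Hgr (Finite c)). intros r Hr. simpl. apply Hc; auto. }
    split; [apply Hgr'; auto|]. split; [auto|]. split; [|auto].
    intros eps He. apply NNPP. intros Hn.
    assert (g + eps <= g); [|lra]. apply Hgr'. intros r Hr.
    destruct (Rle_lt_dec (g + eps) r); auto. exfalso; apply Hn; eauto.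
  - exfalso. specialize (Hlb r0 Hr0). simpl in Hlb. auto.
  - exfalso. assert (Hle : Rbar_le (Finite 0) m_infty) by (apply Hgr; intros r Hr; simpl; auto).
    simpl in Hle; auto.
Qed.

Lemma continuous_eps f x : continuous f x -> forall eps, 0 < eps -> exists delta, 0 < delta /\
  forall y, Rabs (y - x) < delta -> Rabs (f y - f x) < eps.
Proof.
  intros H eps He. apply continuity_pt_filterlim in H. rewrite continuity_pt_locally in H.
  destruct (H (mkposreal eps He)) as [d Hd]. exists d. split; [apply cond_pos|].
  intros y Hy. apply (Hd y). exact Hy.
Qed.

Lemma is_derive_upper f x l : is_derive f x l -> forall eps, 0 < eps -> exists delta, 0 < delta /\
  forall h, 0 < Rabs h < delta -> f (x + h) <= f x + l * h + eps * Rabs h.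
Proof.
  intros H eps He. apply is_derive_Reals in H. destruct (H eps He) as [d Hd].
  exists d. split; [apply cond_pos|]. intros h [Hh1 Hh2].
  assert (Hh0 : h <> 0) by (intro E; rewrite E, Rabs_R0 in Hh1; lra).
  specialize (Hd h Hh0 Hh2).
  assert (E : f (x + h) - f x - l * h = ((f (x + h) - f x) / h - l) * h) by (field; auto).
  assert (Rabs (f (x + h) - f x - l * h) <= eps * Rabs h).
  { rewrite E, Rabs_mult. apply Rmult_le_compat_r; [apply Rabs_pos|lra]. }
  split_Rabs; lra.
Qed.

Lemma MVT_closed (f df : R -> R) (a h : R) : 0 < h ->
  (forall x, a <= x <= a + h -> is_derive f x (df x)) ->
  exists c, a <= c <= a + h /\ f (a + h) - f a = df c * h.
Proof.
  intros Hh Hd.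
  destruct (MVT_gen f a (a + h) df) as [c [Hc E]].
  - intros x Hx. rewrite Rmin_left in Hx by lra. rewrite Rmax_right in Hx by lra. apply Hd; lra.
  - intros x Hx. rewrite Rmin_left in Hx by lra. rewrite Rmax_right in Hx by lra.
    apply continuity_pt_filterlim. apply (ex_derive_continuous f x). exists (df x). apply Hd; lra.
  - rewrite Rmin_left in Hc by lra. rewrite Rmax_right in Hc by lra. exists c. split; auto.
    rewrite E. ring.
Qed.

Lemma is_derive_quad a b c x0 x :
  is_derive (fun y => a + b * (y - x0) + c * (y - x0)^2) x (b + 2 * c * (x - x0)).
Proof. auto_derive; [auto|ring]. Qed.

(* The symmetric second difference [phi (t0 + y) + phi (t0 - y) - k/2 y^2] has derivative
   [phi1 (t0 + y) - phi1 (t0 - y) - k y], which the MVT for [phi1] makes nonpositive. *)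
Lemma C2_neg_second_difference t0 delta phi phi1 phi2 : 0 < delta ->
  C2_on (t0 - delta) (t0 + delta) phi phi1 phi2 -> phi2 t0 < 0 ->
  exists h, 0 < h < delta /\ phi (t0 + h) + phi (t0 - h) < 2 * phi t0.
Proof.
  intros Hd HC Hk. set (k := phi2 t0) in *.
  destruct (HC t0 ltac:(lra)) as [_ [_ Hcont]].
  destruct (continuous_eps phi2 t0 Hcont (- k / 2)) as [eta [Heta Hphi2]]; [lra|].
  set (h := Rmin delta eta / 2).
  assert (Hh : 0 < h) by (unfold h; pose proof (Rmin_pos delta eta Hd Heta); lra).
  assert (Hhd : h < delta) by (unfold h; pose proof (Rmin_l delta eta); lra).
  assert (Hhe : h < eta) by (unfold h; pose proof (Rmin_r delta eta); lra).
  exists h. split; [lra|].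
  set (D := fun y => phi (t0 + y) + phi (t0 - y) - k / 2 * y ^ 2).
  set (dD := fun y => phi1 (t0 + y) - phi1 (t0 - y) - k * y).
  assert (HdD : forall y, 0 <= y <= h -> is_derive D y (dD y)).
  { intros y Hy. unfold D, dD.
    destruct (HC (t0 + y) ltac:(lra)) as [Hp _]. destruct (HC (t0 - y) ltac:(lra)) as [Hm _].
    auto_derive;
        [split; [exists (phi1 (t0 + y)); exact Hp|split; [exists (phi1 (t0 - y)); exact Hm|auto]]|].
    change (Derive (fun x => phi x)) with (Derive phi).
    replace (t0 + - y) with (t0 - y) by ring.
    rewrite (is_derive_unique _ _ _ Hp), (is_derive_unique _ _ _ Hm). field. }
  destruct (MVT_closed D dD 0 h Hh (fun y Hy => HdD y ltac:(lra))) as [c [Hc Ec]].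
  rewrite Rplus_0_l in Ec.
  assert (HdDc : dD c <= 0).
  { unfold dD. destruct (Req_dec c 0) as [->|Hc0].
    - rewrite Rplus_0_r, Rminus_0_r. lra.
    - destruct (MVT_closed phi1 phi2 (t0 - c) (2 * c) ltac:(lra)) as [c' [Hc' Ec']].
      { intros y Hy. apply (HC y). lra. }
      replace (t0 - c + 2 * c) with (t0 + c) in Ec' by ring.
      assert (Hp : phi2 c' < k / 2).
      { assert (Rabs (phi2 c' - k) < - k / 2) by (apply Hphi2; split_Rabs; lra).
        split_Rabs; lra. }
      rewrite Ec'. nra. }
  assert (HD : D h <= D 0) by nra.
  unfold D in HD. rewrite Rplus_0_r, Rminus_0_r in HD.
  assert (0 < h ^ 2) by (apply pow_lt; lra). nra.
Qed.

Lemma quad_bound_extend (g : R -> R) (Lm d F0 beta C M : R) : 0 < d ->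
  (forall r, 0 <= r <= Lm -> g r <= M) ->
  (forall r, 0 <= r <= d -> g r <= F0 + beta * r + C * r ^ 2) ->
  exists C', forall r, 0 <= r <= Lm -> g r <= F0 + beta * r + C' * r ^ 2.
Proof.
  intros Hd HM Hb.
  set (K := (M - F0 + Rabs beta * Lm) / (d * d)).
  exists (Rmax (Rmax C 0) K).
  pose proof (Rmax_l (Rmax C 0) K). pose proof (Rmax_r (Rmax C 0) K).
  pose proof (Rmax_l C 0). pose proof (Rmax_r C 0).
  intros r Hr. destruct (Rle_lt_dec r d) as [Hrd|Hrd].
  - specialize (Hb r ltac:(lra)).
    assert (C * r ^ 2 <= Rmax (Rmax C 0) K * r ^ 2)
      by (apply Rmult_le_compat_r; [apply pow2_ge_0|lra]).
    lra.
  - specialize (HM r Hr).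
    assert (- (Rabs beta * Lm) <= beta * r).
    { assert (Rabs (beta * r) <= Rabs beta * Lm)
        by (rewrite Rabs_mult; apply Rmult_le_compat_l; [apply Rabs_pos|split_Rabs; lra]).
      split_Rabs; lra. }
    assert (K * (d * d) = M - F0 + Rabs beta * Lm) by (unfold K; field; lra).
    assert (Rmax (Rmax C 0) K * (d * d) <= Rmax (Rmax C 0) K * r ^ 2)
      by (apply Rmult_le_compat_l; [lra|simpl; nra]).
    assert (K * (d * d) <= Rmax (Rmax C 0) K * (d * d)) by (apply Rmult_le_compat_r; nra).
    lra.
Qed.

Lemma chord_weight_close d1 d2 L1 L2 eps : 0 < d1 -> 0 < d2 ->
  d1 <= L1 <= d1 + eps -> d2 <= L2 <= d2 + eps ->
  Rabs (L1 / (L1 + L2) - d1 / (d1 + d2)) <= eps / (d1 + d2).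
Proof.
  intros Hd1 Hd2 HL1 HL2.
  assert (E : L1 / (L1 + L2) - d1 / (d1 + d2)
              = ((L1 - d1) * d2 - (L2 - d2) * d1) / ((L1 + L2) * (d1 + d2))) by (field; lra).
  rewrite E. unfold Rdiv. rewrite Rabs_mult, Rabs_inv, (Rabs_right ((L1 + L2) * (d1 + d2))) by nra.
  assert (Hnum : Rabs ((L1 - d1) * d2 - (L2 - d2) * d1) <= eps * (d1 + d2)).
  { assert (0 <= (L1 - d1) * d2 <= eps * d2) by (split; nra).
    assert (0 <= (L2 - d2) * d1 <= eps * d1) by (split; nra).
    split_Rabs; nra. }
  apply Rle_trans with (eps * (d1 + d2) * / ((L1 + L2) * (d1 + d2))).
  - apply Rmult_le_compat_r; auto. left; apply Rinv_0_lt_compat; nra.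
  - replace (eps * (d1 + d2) * / ((L1 + L2) * (d1 + d2))) with (eps * / (L1 + L2)) by (field; lra).
    apply Rmult_le_compat_l; [lra|]. apply Rinv_le_contravar; lra.
Qed.

Lemma le_chord_of_approx a b U d1 d2 m : 0 < d1 -> 0 < d2 -> 0 < m ->
  (forall eps, 0 < eps -> eps < m -> exists L1 L2, d1 <= L1 < d1 + eps /\ d2 <= L2 < d2 + eps /\
     U <= (1 - L1 / (L1 + L2)) * a + (L1 / (L1 + L2)) * b) ->
  U <= d2 / (d1 + d2) * a + d1 / (d1 + d2) * b.
Proof.
  intros Hd1 Hd2 Hm Happ.
  replace (d2 / (d1 + d2) * a + d1 / (d1 + d2) * b) with (a + d1 / (d1 + d2) * (b - a))
    by (field; lra).
  apply le_epsilon. intros eta Heta.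
  set (W := b - a). pose proof (Rabs_pos W).
  set (eps := Rmin (m / 2) (eta * (d1 + d2) / (Rabs W + 1))).
  assert (Heps : 0 < eps) by (apply Rmin_glb_lt; [lra|apply Rdiv_lt_0_compat; nra]).
  assert (Hem : eps < m) by
      (unfold eps; pose proof (Rmin_l (m / 2) (eta * (d1 + d2) / (Rabs W + 1))); lra).
  assert (Heta' : eps <= eta * (d1 + d2) / (Rabs W + 1)) by apply Rmin_r.
  destruct (Happ eps Heps Hem) as [L1 [L2 [HL1 [HL2 K]]]].
  replace ((1 - L1 / (L1 + L2)) * a + L1 / (L1 + L2) * b) with (a + L1 / (L1 + L2) * W) in K
    by (unfold W; field; lra).
  pose proof (chord_weight_close d1 d2 L1 L2 eps Hd1 Hd2 ltac:(lra) ltac:(lra)) as Hw.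
  assert (Herr : (L1 / (L1 + L2) - d1 / (d1 + d2)) * W <= eta).
  { eapply Rle_trans; [apply Rle_abs|]. rewrite Rabs_mult.
    apply Rle_trans with (eps / (d1 + d2) * Rabs W); [apply Rmult_le_compat_r; auto|].
    apply Rle_trans with (eta / (Rabs W + 1) * Rabs W).
    - apply Rmult_le_compat_r; auto.
      apply (Rmult_le_reg_r (d1 + d2)); [lra|].
      replace (eps / (d1 + d2) * (d1 + d2)) with eps by (field; lra).
      replace (eta / (Rabs W + 1) * (d1 + d2)) with (eta * (d1 + d2) / (Rabs W + 1)) by
          (field; lra).
      exact Heta'.
    - apply (Rmult_le_reg_r (Rabs W + 1)); [lra|].
      replace (eta / (Rabs W + 1) * Rabs W * (Rabs W + 1)) with (eta * Rabs W) by (field; lra).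
      nra. }
  fold W. lra.
Qed.

Lemma fold_Rmin_le l c x : In x l -> fold_right Rmin c l <= x.
Proof.
  induction l as [|y l IH]; simpl; [tauto|].
  intros [->|Hx]; [apply Rmin_l|]. eapply Rle_trans; [apply Rmin_r|auto].
Qed.

Lemma fold_Rmin_pos l c : 0 < c -> (forall x, In x l -> 0 < x) -> 0 < fold_right Rmin c l.
Proof.
  intros Hc. induction l as [|y l IH]; simpl; intros Hl; [auto|].
  apply Rmin_glb_lt; auto.
Qed.

Lemma fold_Rmax_ge l c x : In x l -> x <= fold_right Rmax c l.
Proof.
  induction l as [|y l IH]; simpl; [tauto|].
  intros [->|Hx]; [apply Rmax_l|]. eapply Rle_trans; [apply IH; auto|apply Rmax_r].
Qed.

Lemma fold_Rmax_ge_init l c : c <= fold_right Rmax c l.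
Proof. induction l as [|y l IH]; simpl; [lra|]. eapply Rle_trans; [apply IH|apply Rmax_r]. Qed.

Lemma chord_le_slope w p U X Y K : 0 < w -> 0 <= p ->
  U <= X + p * ((Y - X) / w) -> Rabs (Y - X) / w <= K -> U <= X + K * p.
Proof.
  intros Hw Hp HU HK.
  assert ((Y - X) / w <= K).
  { eapply Rle_trans; [|exact HK]. unfold Rdiv. apply Rmult_le_compat_r; [|apply Rle_abs].
    left; apply Rinv_0_lt_compat; lra. }
  nra.
Qed.

(** * Distances on the metric graph *)

Section MetricGraph.
Variable G : graph_data.
Hypothesis HG : is_metric_graph G.

Lemma edge_wf : forall e, (e < nE G)%nat ->
     (src G e < nV G)%nat /\ (tgt G e < nV G)%nat /\ src G e <> tgt G e /\ 0 < len G e.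
Proof. destruct HG as [H _]; exact H. Qed.

Lemma len_pos : forall e, (e < nE G)%nat -> 0 < len G e.
Proof. intros e He. apply (edge_wf e He). Qed.

Lemma dist_pt_pt : forall e t s, (e < nE G)%nat -> 0 <= t <= len G e -> 0 <= s <= len G e ->
     dist G (pt G e t) (pt G e s) = Rabs (t - s).
Proof. destruct HG as [_ [_ [_ [_ H]]]]; exact H. Qed.

Lemma pt_src e : pt G e 0 = PV (src G e).
Proof. unfold pt. destruct (Rle_dec 0 0); [auto|lra]. Qed.

Lemma pt_tgt e : 0 < len G e -> pt G e (len G e) = PV (tgt G e).
Proof.
  intros. unfold pt. destruct (Rle_dec (len G e) 0); [lra|].
  destruct (Rle_dec (len G e) (len G e)); [auto|lra].
Qed.

Lemma pt_in e t : 0 < t < len G e -> pt G e t = PE e t.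
Proof.
  intros. unfold pt. destruct (Rle_dec t 0); [lra|].
  destruct (Rle_dec (len G e) t); [lra|auto].
Qed.

Lemma pt_valid e t : (e < nE G)%nat -> 0 <= t <= len G e -> valid_point G (pt G e t).
Proof.
  intros He Ht. destruct (edge_wf e He) as [H1 [H2 _]]. unfold pt.
  destruct (Rle_dec t 0); simpl; auto. destruct (Rle_dec (len G e) t); simpl; auto.
  split; auto; lra.
Qed.

Lemma pt_cases e t : (e < nE G)%nat -> 0 <= t <= len G e ->
  (t = 0 /\ pt G e t = PV (src G e)) \/ (t = len G e /\ pt G e t = PV (tgt G e)) \/
  (0 < t < len G e /\ pt G e t = PE e t).
Proof.
  intros He Ht. pose proof (len_pos e He).
  destruct (Req_dec t 0) as [->|H0]. left; split; auto; apply pt_src.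
  destruct (Req_dec t (len G e)) as [->|H1]. right; left; split; auto; apply pt_tgt; auto.
  right; right. split. lra. apply pt_in; lra.
Qed.

Lemma pt_inj e t s : (e < nE G)%nat -> 0 <= t <= len G e -> 0 <= s <= len G e ->
  pt G e t = pt G e s -> t = s.
Proof.
  intros He Ht Hs E. destruct (edge_wf e He) as [_ [_ [Hne _]]].
  destruct (pt_cases e t He Ht) as [[-> E1]|[[-> E1]|[Ht' E1]]];
  destruct (pt_cases e s He Hs) as [[-> E2]|[[-> E2]|[Hs' E2]]];
  try lra; rewrite E1, E2 in E; inversion E; congruence || lra.
Qed.

Lemma pt_eq_PV e t v : (e < nE G)%nat -> 0 <= t <= len G e -> pt G e t = PV v ->
  (t = 0 /\ src G e = v) \/ (t = len G e /\ tgt G e = v).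
Proof.
  intros He Ht E. destruct (pt_cases e t He Ht) as [[-> E1]|[[-> E1]|[Ht' E1]]]; rewrite E1 in E;
  inversion E; auto.
Qed.

Lemma pt_eq_PE e t f s : (e < nE G)%nat -> 0 <= t <= len G e -> pt G e t = PE f s ->
  f = e /\ s = t /\ 0 < t < len G e.
Proof.
  intros He Ht E. destruct (pt_cases e t He Ht) as [[-> E1]|[[-> E1]|[Ht' E1]]]; rewrite E1 in E;
  inversion E; subst; auto.
Qed.

Lemma pt_vertex_one_sided e t v sg h : (e < nE G)%nat -> 0 <= t <= len G e -> pt G e t = PV v ->
  0 < h -> (sg = 1 \/ sg = -1) -> 0 <= t - sg * h <= len G e -> 0 <= t + sg * h <= len G e -> False.
Proof.
  intros He Ht Ev Hh Hsg H1 H2.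
  destruct (pt_eq_PV e t v He Ht Ev) as [[-> _]|[-> _]]; destruct Hsg as [-> | ->]; lra.
Qed.

(* The seed [1] only matters for a graph without edges. *)
Definition min_len : R := fold_right Rmin 1 (map (len G) (seq 0 (nE G))).

Lemma min_len_le e : (e < nE G)%nat -> min_len <= len G e.
Proof. intros He. apply fold_Rmin_le. apply in_map. apply in_seq. lia. Qed.

Lemma min_len_pos : 0 < min_len.
Proof.
  apply fold_Rmin_pos; [lra|]. intros x Hx. apply in_map_iff in Hx.
  destruct Hx as [e [<- He]]. apply in_seq in He. apply len_pos. lia.
Qed.

Lemma walk_nonneg v w r : walk G v w r -> 0 <= r.
Proof. induction 1; [lra| pose proof (len_pos e H); lra | pose proof (len_pos e H); lra]. Qed.

Lemma walk_app v w z r1 r2 : walk G v w r1 -> walk G w z r2 -> walk G v z (r1 + r2).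
Proof.
  induction 1; intros Hw.
  - rewrite Rplus_0_l; auto.
  - replace (len G e + r + r2) with (len G e + (r + r2)) by ring. eapply walk_cons; eauto.
  - replace (len G e + r + r2) with (len G e + (r + r2)) by ring. eapply walk_cons_rev; eauto.
Qed.

Lemma walk_edge_fw e : (e < nE G)%nat -> walk G (src G e) (tgt G e) (len G e).
Proof.
  intros He. destruct (edge_wf e He) as [_ [H2 _]]. rewrite <- (Rplus_0_r (len G e)).
  eapply walk_cons; eauto. constructor; auto.
Qed.

Lemma walk_edge_bw e : (e < nE G)%nat -> walk G (tgt G e) (src G e) (len G e).
Proof.
  intros He. destruct (edge_wf e He) as [H1 _]. rewrite <- (Rplus_0_r (len G e)).
  eapply walk_cons_rev; eauto. constructor; auto.
Qed.

Lemma walk_rev v w r : walk G v w r -> walk G w v r.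
Proof.
  induction 1.
  - constructor; auto.
  - subst v. rewrite Rplus_comm. eapply walk_app; eauto. apply walk_edge_bw; auto.
  - subst v. rewrite Rplus_comm. eapply walk_app; eauto. apply walk_edge_fw; auto.
Qed.

Lemma walk_min_len v w r : walk G v w r -> v <> w -> min_len <= r.
Proof.
  induction 1; intros Hne; [congruence| |];
  pose proof (min_len_le e H); pose proof (walk_nonneg _ _ _ H1); lra.
Qed.

Lemma exit_to_nonneg x v a : valid_point G x -> exit_to G x v a -> 0 <= a.
Proof.
  destruct x as [w|e t]; simpl; intros Hx Hex.
  - destruct Hex; lra.
  - destruct Hx. destruct Hex as [[_ ->]|[_ ->]]; lra.
Qed.

Lemma path_length_nonneg x y r : valid_point G x -> valid_point G y -> path_length G x y r ->
  0 <= r.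
Proof.
  intros Hx Hy [[vx [vy [a [b [r' [H1 [H2 [H3 ->]]]]]]]]|[e [t [s [_ [_ ->]]]]]].
  - pose proof (exit_to_nonneg _ _ _ Hx H1); pose proof (exit_to_nonneg _ _ _ Hy H2);
    pose proof (walk_nonneg _ _ _ H3); lra.
  - apply Rabs_pos.
Qed.

Lemma exit_to_exists x : valid_point G x -> exists v a, exit_to G x v a /\ (v < nV G)%nat.
Proof.
  destruct x as [w|e t]; simpl; intros Hx.
  - exists w, 0. auto.
  - destruct Hx as [He _]. exists (src G e), t. split; auto. apply (edge_wf e He).
Qed.

Lemma walk_exists : forall v w, (v < nV G)%nat -> (w < nV G)%nat -> exists r, walk G v w r.
Proof. destruct HG as [_ [_ [_ [H _]]]]; exact H. Qed.

Lemma path_length_exists x y : valid_point G x -> valid_point G y -> exists r, path_length G x y r.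
Proof.
  intros Hx Hy. destruct (exit_to_exists x Hx) as [vx [a [H1 H1']]].
  destruct (exit_to_exists y Hy) as [vy [b [H2 H2']]].
  destruct (walk_exists vx vy H1' H2') as [r' Hw].
  exists (a + r' + b). left. exists vx, vy, a, b, r'. auto.
Qed.

Lemma dist_glb_spec x y : valid_point G x -> valid_point G y ->
  0 <= dist G x y /\ (forall r, path_length G x y r -> dist G x y <= r) /\
  (forall eps, 0 < eps -> exists r, path_length G x y r /\ r < dist G x y + eps) /\
  (forall c, (forall r, path_length G x y r -> c <= r) -> c <= dist G x y).
Proof.
  intros Hx Hy. apply Glb_Rbar_nonneg_real; [apply path_length_exists; auto|].
  intros r Hr. apply (path_length_nonneg x y r Hx Hy Hr).
Qed.

Lemma dist_nonneg x y : valid_point G x -> valid_point G y -> 0 <= dist G x y.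
Proof. intros Hx Hy. destruct (dist_glb_spec x y Hx Hy) as [H _]. exact H. Qed.

Lemma dist_le_path_length x y r : valid_point G x -> valid_point G y ->
  path_length G x y r -> dist G x y <= r.
Proof. intros Hx Hy. destruct (dist_glb_spec x y Hx Hy) as [_ [H _]]. apply H. Qed.

Lemma dist_approx x y eps : valid_point G x -> valid_point G y -> 0 < eps ->
  exists r, path_length G x y r /\ r < dist G x y + eps.
Proof. intros Hx Hy. destruct (dist_glb_spec x y Hx Hy) as [_ [_ [H _]]]. apply H. Qed.

Lemma dist_ge x y c : valid_point G x -> valid_point G y ->
  (forall r, path_length G x y r -> c <= r) -> c <= dist G x y.
Proof. intros Hx Hy. destruct (dist_glb_spec x y Hx Hy) as [_ [_ [_ H]]]. apply H. Qed.

Lemma path_length_sym x y r : path_length G x y r -> path_length G y x r.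
Proof.
  intros [[vx [vy [a [b [r' [H1 [H2 [H3 ->]]]]]]]]|[e [t [s [-> [-> ->]]]]]].
  - left. exists vy, vx, b, a, r'. repeat split; auto. apply walk_rev; auto. ring.
  - right. exists e, s, t. repeat split. apply Rabs_minus_sym.
Qed.

Lemma dist_sym x y : dist G x y = dist G y x.
Proof.
  unfold dist. f_equal. apply Glb_Rbar_eqset. intros r; split; apply path_length_sym.
Qed.

Lemma path_length_concat x y w r1 r2 : valid_point G y ->
  path_length G x y r1 -> path_length G y w r2 -> exists r, r <= r1 + r2 /\ path_length G x w r.
Proof.
  intros Hy P1 P2.
  destruct P1 as [[vx [vy [a [b [r' [H1 [H2 [H3 ->]]]]]]]]|[e [t [s [-> [-> ->]]]]]];
  destruct P2 as [[vy2 [vw [b2 [c [r'' [K1 [K2 [K3 ->]]]]]]]]|[e2 [t2 [s2 [E2 [-> ->]]]]]].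
  - destruct y as [y|e t]; simpl in H2, K1.
    + destruct H2 as [-> ->]; destruct K1 as [-> ->].
      exists (a + (r' + r'') + c). split; [lra|]. left. exists vx, vw, a, c, (r' + r'').
      repeat split; auto. eapply walk_app; [exact H3|exact K3].
    + destruct Hy as [He Ht].
      destruct H2 as [[-> ->]|[-> ->]]; destruct K1 as [[-> ->]|[-> ->]].
      * exists (a + (r' + r'') + c). split; [lra|]. left. exists vx, vw, a, c, (r' + r'').
        repeat split; auto. eapply walk_app; [exact H3|exact K3].
      * exists (a + (r' + (len G e + r'')) + c). split; [lra|]. left.
        exists vx, vw, a, c, (r' + (len G e + r'')).
        repeat split; auto. eapply walk_app; [exact H3|].
        eapply walk_app; [apply walk_edge_fw; auto|exact K3].
      * exists (a + (r' + (len G e + r'')) + c). split; [lra|]. left.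
        exists vx, vw, a, c, (r' + (len G e + r'')).
        repeat split; auto. eapply walk_app; [exact H3|].
        eapply walk_app; [apply walk_edge_bw; auto|exact K3].
      * exists (a + (r' + r'') + c). split; [lra|]. left. exists vx, vw, a, c, (r' + r'').
        repeat split; auto. eapply walk_app; [exact H3|exact K3].
  - subst y. simpl in H2. destruct H2 as [[-> ->]|[-> ->]].
    + exists (a + r' + s2). split. split_Rabs; lra. left. exists vx, (src G e2), a, s2, r'.
      simpl; auto.
    + exists (a + r' + (len G e2 - s2)). split. split_Rabs; lra.
      left. exists vx, (tgt G e2), a, (len G e2 - s2), r'. simpl; auto.
  - simpl in K1. destruct K1 as [[-> ->]|[-> ->]].
    + exists (t + r'' + c). split. split_Rabs; lra. left. exists (src G e), vw, t, c, r''.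
      simpl; auto.
    + exists (len G e - t + r'' + c). split. split_Rabs; lra.
      left. exists (tgt G e), vw, (len G e - t), c, r''. simpl; auto.
  - inversion E2; subst. exists (Rabs (t - s2)). split. split_Rabs; lra. right.
    exists e2, t, s2; auto.
Qed.

Lemma dist_triangle x y w : valid_point G x -> valid_point G y -> valid_point G w ->
  dist G x w <= dist G x y + dist G y w.
Proof.
  intros Hx Hy Hw.
  apply le_epsilon. intros eps He.
  destruct (dist_approx x y (eps/2) Hx Hy) as [r1 [P1 R1]]; [lra|].
  destruct (dist_approx y w (eps/2) Hy Hw) as [r2 [P2 R2]]; [lra|].
  destruct (path_length_concat x y w r1 r2 Hy P1 P2) as [r [Hr P]].
  pose proof (dist_le_path_length x w r Hx Hw P). lra.
Qed.

(* Points closer to [x] than this lie on the edge of [x], or on an edge at the vertex [x]. *)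
Definition star_radius (x : point) : R :=
  match x with PV _ => min_len | PE e t => Rmin t (len G e - t) end.

Lemma star_radius_pos x : valid_point G x -> 0 < star_radius x.
Proof.
  destruct x as [v|e t]; simpl; intros Hx. apply min_len_pos. destruct Hx. apply Rmin_glb_lt; lra.
Qed.

Lemma star_radius_le_exit x v a : valid_point G x -> exit_to G x v a -> (exists e t, x = PE e t) ->
  star_radius x <= a.
Proof.
  intros Hx Hex [e [t ->]]. simpl in *. destruct Hex as [[_ ->]|[_ ->]]. apply Rmin_l. apply Rmin_r.
Qed.

Definition sep_radius (x y : point) : R :=
  match x, y with
  | PE e t, PE f s =>
      if Nat.eq_dec e f then Rmin (Rmin (star_radius x) (star_radius y)) (Rabs (t - s))
      else Rmin (star_radius x) (star_radius y)
  | _, _ => Rmin (star_radius x) (star_radius y)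
  end.

Lemma sep_radius_pos x y : valid_point G x -> valid_point G y -> x <> y -> 0 < sep_radius x y.
Proof.
  intros Hx Hy Hne. pose proof (star_radius_pos x Hx). pose proof (star_radius_pos y Hy).
  assert (0 < Rmin (star_radius x) (star_radius y)) by (apply Rmin_glb_lt; auto).
  destruct x as [v|e t]; destruct y as [w|f s]; simpl; auto.
  destruct (Nat.eq_dec e f); auto. subst. apply Rmin_glb_lt; auto.
  apply Rabs_pos_lt. intro E. apply Hne. f_equal. lra.
Qed.

Lemma sep_radius_le_path_length x y r : valid_point G x -> valid_point G y -> x <> y ->
  path_length G x y r -> sep_radius x y <= r.
Proof.
  intros Hx Hy Hne P.
  assert (Hc : sep_radius x y <= Rmin (star_radius x) (star_radius y)).
  { destruct x as [v|e t]; destruct y as [w|f s]; simpl; try lra.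
    destruct (Nat.eq_dec e f); [apply Rmin_l|lra]. }
  pose proof (Rmin_l (star_radius x) (star_radius y)).
  pose proof (Rmin_r (star_radius x) (star_radius y)).
  destruct P as [[vx [vy [a [b [r' [H1 [H2 [H3 ->]]]]]]]]|[e [t [s [-> [-> ->]]]]]].
  - pose proof (exit_to_nonneg _ _ _ Hx H1); pose proof (exit_to_nonneg _ _ _ Hy H2);
    pose proof (walk_nonneg _ _ _ H3).
    destruct x as [v|e t].
    + destruct y as [w|f s].
      * simpl in H1, H2. destruct H1 as [-> ->]; destruct H2 as [-> ->].
        assert (Hvw : v <> w) by congruence. pose proof (walk_min_len _ _ _ H3 Hvw).
        simpl in *. lra.
      * pose proof (star_radius_le_exit _ _ _ Hy H2 (ex_intro _ f (ex_intro _ s eq_refl))). lra.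
    + pose proof (star_radius_le_exit _ _ _ Hx H1 (ex_intro _ e (ex_intro _ t eq_refl))). lra.
  - simpl. destruct (Nat.eq_dec e e); [apply Rmin_r|congruence].
Qed.

Lemma dist_pos x y : valid_point G x -> valid_point G y -> x <> y -> 0 < dist G x y.
Proof.
  intros Hx Hy Hne. eapply Rlt_le_trans; [apply (sep_radius_pos x y Hx Hy Hne)|].
  apply dist_ge; auto. intros r. apply sep_radius_le_path_length; auto.
Qed.

Lemma dist_self x : valid_point G x -> dist G x x = 0.
Proof.
  intros Hx. apply Rle_antisym; [|apply dist_nonneg; auto].
  apply dist_le_path_length; auto. destruct x as [v|e t].
  - left. exists v, v, 0, 0, 0. simpl. repeat split; auto. constructor; auto. ring.
  - right. exists e, t, t. repeat split. rewrite Rminus_diag, Rabs_R0; auto.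
Qed.

(** * Convex functions are viscosity sub-solutions *)

Lemma near_PE e t y : valid_point G (PE e t) -> valid_point G y ->
  dist G (PE e t) y < star_radius (PE e t) ->
  exists s, 0 < s < len G e /\ y = PE e s /\ dist G (PE e t) y = Rabs (t - s).
Proof.
  intros Hx Hy Hd.
  destruct (dist_approx _ _ (star_radius (PE e t) - dist G (PE e t) y) Hx Hy) as [r [P Hr]]; [lra|].
  destruct P as [[vx [vy [a [b [r' [H1 [H2 [H3 ->]]]]]]]]|[e' [t' [s [E1 [-> ->]]]]]].
  - exfalso. pose proof (star_radius_le_exit _ _ _ Hx H1 (ex_intro _ e (ex_intro _ t eq_refl))).
    pose proof (exit_to_nonneg _ _ _ Hy H2). pose proof (walk_nonneg _ _ _ H3). lra.
  - inversion E1; subst. exists s. simpl in Hy, Hx. destruct Hy as [He Hs]. destruct Hx as [_ Ht].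
    split; auto. split; auto.
    rewrite <- (pt_in e' t') by lra. rewrite <- (pt_in e' s) by lra. apply dist_pt_pt; auto; lra.
Qed.

Lemma near_PV v y : valid_point G (PV v) -> valid_point G y -> dist G (PV v) y < min_len ->
  y = PV v \/ exists e s, (e < nE G)%nat /\ 0 < s < len G e /\ y = PE e s /\
    ((src G e = v /\ dist G (PV v) y = s) \/ (tgt G e = v /\ dist G (PV v) y = len G e - s)).
Proof.
  intros Hx Hy Hd.
  destruct (dist_approx _ _ (min_len - dist G (PV v) y) Hx Hy) as [r [P Hr]]; [lra|].
  destruct P as [[vx [vy [a [b [r' [H1 [H2 [H3 ->]]]]]]]]|[e' [t' [s [E1 _]]]]]; [|discriminate].
  simpl in H1. destruct H1 as [-> ->].
  pose proof (exit_to_nonneg _ _ _ Hy H2). pose proof (walk_nonneg _ _ _ H3).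
  assert (vy = v).
  { destruct (Nat.eq_dec v vy) as [E|E]; auto. pose proof (walk_min_len _ _ _ H3 E). lra. }
  subst vy. destruct y as [w|e s].
  - left. simpl in H2. destruct H2 as [-> _]; auto.
  - right. simpl in Hy. destruct Hy as [He Hs]. exists e, s. split; auto. split; auto. split; auto.
    simpl in H2. destruct H2 as [[E _]|[E _]].
    + left. split; [congruence|]. rewrite <- (pt_in e s) by lra. rewrite E, <- (pt_src e).
      rewrite dist_pt_pt by (auto; lra). split_Rabs; lra.
    + right. split; [congruence|]. rewrite <- (pt_in e s) by lra. rewrite E, <- (pt_tgt e) by lra.
      rewrite dist_pt_pt by (auto; lra). split_Rabs; lra.
Qed.

Definition toward (v e : nat) (h : R) : R := if Nat.eq_dec (src G e) v then h else len G e - h.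

Lemma incident_cases v e : incident G v e -> src G e = v \/ (src G e <> v /\ tgt G e = v).
Proof. intros [_ [H|H]]; destruct (Nat.eq_dec (src G e) v); auto. Qed.

Lemma pt_vcoord v e : incident G v e -> pt G e (vcoord G v e) = PV v.
Proof.
  intros Hi. pose proof Hi as [He _]. unfold vcoord.
  destruct (incident_cases v e Hi) as [E|[E1 E2]].
  - destruct (Nat.eq_dec (src G e) v); [|congruence]. rewrite pt_src. congruence.
  - destruct (Nat.eq_dec (src G e) v); [congruence|]. rewrite pt_tgt by (apply len_pos; auto).
    congruence.
Qed.

Lemma toward_range v e h : 0 < h < len G e -> 0 < toward v e h < len G e.
Proof. unfold toward; destruct Nat.eq_dec; lra. Qed.

Lemma dist_toward v e h : incident G v e -> 0 < h < len G e ->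
  dist G (PE e (toward v e h)) (PV v) = h.
Proof.
  intros Hi Hh. pose proof Hi as [He _]. pose proof (toward_range v e h Hh).
  rewrite <- (pt_in e) by lra. rewrite <- (pt_vcoord v e Hi).
  rewrite dist_pt_pt by (auto; unfold toward, vcoord; destruct Nat.eq_dec; lra).
  unfold toward, vcoord; destruct Nat.eq_dec; split_Rabs; lra.
Qed.

Lemma exit_toward v e h : incident G v e -> 0 < h < len G e -> exit_to G (PE e (toward v e h)) v h.
Proof.
  intros Hi Hh. simpl. unfold toward. destruct (incident_cases v e Hi) as [E|[E1 E2]].
  - destruct Nat.eq_dec; [|congruence]. left; auto.
  - destruct Nat.eq_dec; [congruence|]. right; split; [auto|ring].
Qed.

Lemma exit_toward_ge v e h w a : 0 < h <= len G e / 2 -> exit_to G (PE e (toward v e h)) w a ->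
  h <= a.
Proof.
  intros Hh Hex. simpl in Hex. unfold toward in Hex.
  destruct Nat.eq_dec; destruct Hex as [[_ ->]|[_ ->]]; lra.
Qed.

Lemma dist_toward_toward v e f h : (v < nV G)%nat -> incident G v e -> incident G v f -> e <> f ->
  0 < h -> h <= len G e / 2 -> h <= len G f / 2 ->
  dist G (PE e (toward v e h)) (PE f (toward v f h)) = 2 * h.
Proof.
  intros Hv Hie Hif Hef Hh Hhe Hhf.
  pose proof (toward_range v e h ltac:(lra)). pose proof (toward_range v f h ltac:(lra)).
  pose proof Hie as [He _]. pose proof Hif as [Hf _].
  assert (Vx : valid_point G (PE e (toward v e h))) by (simpl; split; auto; lra).
  assert (Vy : valid_point G (PE f (toward v f h))) by (simpl; split; auto; lra).
  apply Rle_antisym.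
  - replace (2 * h) with (h + 0 + h) by ring. apply dist_le_path_length; auto.
    left. exists v, v, h, h, 0.
    repeat split; try apply exit_toward; auto; try lra. constructor. auto.
  - apply dist_ge; auto.
    intros r [[vx [vy [a [b [r' [K1 [K2 [K3 ->]]]]]]]]|[e' [t' [s [E1 [E2 _]]]]]].
    + pose proof (exit_toward_ge v e h vx a ltac:(lra) K1).
      pose proof (exit_toward_ge v f h vy b ltac:(lra) K2).
      pose proof (walk_nonneg _ _ _ K3). lra.
    + inversion E1; inversion E2; subst. congruence.
Qed.

Lemma usc_of_local_lipschitz (w : point -> R) :
  (forall x, valid_point G x -> exists r K, 0 < r /\ 0 <= K /\
     forall y, valid_point G y -> dist G x y < r -> w y <= w x + K * dist G x y) ->
  usc_on_graph G w.
Proof.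
  intros Hlip x Hx eps He. destruct (Hlip x Hx) as [r [K [Hr [HK Hw]]]].
  exists (Rmin r (eps / (K + 1))). split.
  { apply Rmin_glb_lt; auto. apply Rdiv_lt_0_compat; lra. }
  intros y Hy Hd. pose proof (Rmin_l r (eps / (K + 1))). pose proof (Rmin_r r (eps / (K + 1))).
  pose proof (dist_nonneg x y Hx Hy). specialize (Hw y Hy ltac:(lra)).
  assert (K * dist G x y < eps); [|lra].
  apply (Rle_lt_trans _ ((K + 1) * dist G x y)); [nra|].
  apply (Rmult_lt_reg_r (/ (K + 1))); [apply Rinv_0_lt_compat; lra|].
  replace ((K + 1) * dist G x y * / (K + 1)) with (dist G x y) by (field; lra).
  replace (eps * / (K + 1)) with (eps / (K + 1)) by reflexivity. lra.
Qed.

Section Convex.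
Variable u : point -> R.
Hypothesis Hconv : convex_on_graph G u.

Lemma convex_on_edge e t1 t t2 : (e < nE G)%nat -> 0 <= t1 < t -> t < t2 <= len G e ->
  u (pt G e t) <= (t2 - t) / (t2 - t1) * u (pt G e t1) + (t - t1) / (t2 - t1) * u (pt G e t2).
Proof.
  intros He H1 H2.
  assert (V : forall s, 0 <= s <= len G e -> valid_point G (pt G e s)) by
      (intros; apply pt_valid; auto).
  pose proof (Hconv (pt G e t1) (pt G e t2) (pt G e t) (V t1 ltac:(lra)) (V t2 ltac:(lra))
      (V t ltac:(lra))) as K.
  rewrite !dist_pt_pt in K by (auto; lra).
  replace (Rabs (t2 - t)) with (t2 - t) in K by (split_Rabs; lra).
  replace (Rabs (t1 - t2)) with (t2 - t1) in K by (split_Rabs; lra).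
  replace (Rabs (t1 - t)) with (t - t1) in K by (split_Rabs; lra).
  apply K.
  - intro E. apply (pt_inj e t1 t2 He) in E; lra.
  - unfold in_segment. rewrite !dist_pt_pt by (auto; lra). split_Rabs; lra.
Qed.

Definition max_edge_slope : R :=
  fold_right Rmax 0
    (map (fun e => Rabs (u (PV (tgt G e)) - u (PV (src G e))) / len G e) (seq 0 (nE G))).

Lemma max_edge_slope_ge e : (e < nE G)%nat ->
  Rabs (u (PV (tgt G e)) - u (PV (src G e))) / len G e <= max_edge_slope.
Proof.
  intros He. apply fold_Rmax_ge.
  apply (in_map (fun e => Rabs (u (PV (tgt G e)) - u (PV (src G e))) / len G e)).
  apply in_seq. lia.
Qed.

Lemma convex_lipschitz_PV v : valid_point G (PV v) -> forall y, valid_point G y ->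
  dist G (PV v) y < min_len -> u y <= u (PV v) + max_edge_slope * dist G (PV v) y.
Proof.
  intros Hx y Hy Hd.
  destruct (near_PV v y Hx Hy Hd) as [->|[e [s [He [Hs [-> [[Es Ed]|[Et Ed]]]]]]]].
  - rewrite dist_self by auto. lra.
  - pose proof (len_pos e He). pose proof (max_edge_slope_ge e He) as Hslope.
    pose proof (convex_on_edge e 0 s (len G e) He ltac:(lra) ltac:(lra)) as Hc.
    rewrite pt_in, pt_src, pt_tgt in Hc by lra. rewrite Es in Hc, Hslope. rewrite Ed.
    apply (chord_le_slope (len G e) s _ _ (u (PV (tgt G e)))); [lra|lra| |exact Hslope].
    eapply Rle_trans; [exact Hc|right; field; lra].
  - pose proof (len_pos e He). pose proof (max_edge_slope_ge e He) as Hslope.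
    pose proof (convex_on_edge e 0 s (len G e) He ltac:(lra) ltac:(lra)) as Hc.
    rewrite pt_in, pt_src, pt_tgt in Hc by lra. rewrite Et, Rabs_minus_sym in Hslope.
    rewrite Et in Hc. rewrite Ed.
    apply (chord_le_slope (len G e) (len G e - s) _ _ (u (PV (src G e)))); [lra|lra| |exact Hslope].
    eapply Rle_trans; [exact Hc|right; field; lra].
Qed.

Lemma convex_lipschitz_PE e t : valid_point G (PE e t) -> exists K, 0 <= K /\
  forall y, valid_point G y -> dist G (PE e t) y < star_radius (PE e t) ->
    u y <= u (PE e t) + K * dist G (PE e t) y.
Proof.
  intros Hx. pose proof Hx as [He Ht].
  set (U := u (PE e t)). set (A := u (PV (src G e))). set (B := u (PV (tgt G e))).
  exists (Rmax (Rabs (A - U) / t) (Rabs (B - U) / (len G e - t))).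
  split; [eapply Rle_trans; [|apply Rmax_l];
          apply Rmult_le_pos; [apply Rabs_pos|left; apply Rinv_0_lt_compat; lra]|].
  intros y Hy Hd.
  destruct (near_PE e t y Hx Hy Hd) as [s [Hs [-> Ed]]]. rewrite Ed.
  destruct (Rtotal_order s t) as [Hst|[->|Hst]].
  - pose proof (convex_on_edge e 0 s t He ltac:(lra) ltac:(lra)) as Hc.
    rewrite (pt_in e s), (pt_in e t), pt_src in Hc by lra. fold U A in Hc.
    rewrite (Rabs_right (t - s)) by lra.
    apply (chord_le_slope t (t - s) _ _ A); [lra|lra| |apply Rmax_l].
    eapply Rle_trans; [exact Hc|right; field; lra].
  - rewrite Rminus_diag, Rabs_R0. fold U. lra.
  - pose proof (convex_on_edge e t s (len G e) He ltac:(lra) ltac:(lra)) as Hc.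
    rewrite (pt_in e s), (pt_in e t), pt_tgt in Hc by lra. fold U B in Hc.
    rewrite (Rabs_left (t - s)) by lra.
    apply (chord_le_slope (len G e - t) (- (t - s)) _ _ B); [lra|lra| |apply Rmax_r].
    eapply Rle_trans; [exact Hc|right; field; lra].
Qed.

Lemma convex_usc : usc_on_graph G u.
Proof.
  apply usc_of_local_lipschitz. intros [v|e t] Hx.
  - exists min_len, max_edge_slope. split; [apply min_len_pos|]. split; [apply fold_Rmax_ge_init|].
    apply convex_lipschitz_PV; auto.
  - destruct (convex_lipschitz_PE e t Hx) as [K [HK Hlip]].
    exists (star_radius (PE e t)), K. split; [apply star_radius_pos; auto|]. auto.
Qed.

Lemma convex_edge_test : forall e t0 delta, (e < nE G)%nat -> 0 < t0 < len G e -> 0 < delta ->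
     0 <= t0 - delta -> t0 + delta <= len G e ->
     forall phi phi1 phi2, C2_on (t0 - delta) (t0 + delta) phi phi1 phi2 ->
       phi t0 = u (PE e t0) ->
       (forall t, t0 - delta < t < t0 + delta -> u (PE e t) <= phi t) ->
       0 <= phi2 t0.
Proof.
  intros e t0 delta He Ht0 Hd H1 H2 phi phi1 phi2 HC Hphi Hle.
  destruct (Rle_lt_dec 0 (phi2 t0)) as [|Hk]; auto. exfalso.
  destruct (C2_neg_second_difference t0 delta phi phi1 phi2 Hd HC Hk) as [h [Hh Hsum]].
  pose proof (convex_on_edge e (t0 - h) t0 (t0 + h) He ltac:(lra) ltac:(lra)) as Hmid.
  rewrite !pt_in in Hmid by lra.
  replace ((t0 + h - t0) / (t0 + h - (t0 - h))) with (/2) in Hmid by (field; lra).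
  replace ((t0 - (t0 - h)) / (t0 + h - (t0 - h))) with (/2) in Hmid by (field; lra).
  pose proof (Hle (t0 - h) ltac:(lra)). pose proof (Hle (t0 + h) ltac:(lra)).
  lra.
Qed.

Lemma toward_upper_bound v e phie phie1 : incident G v e -> C1_on_closed 0 (len G e) phie phie1 ->
  phie (vcoord G v e) = u (PV v) -> (forall t, 0 <= t <= len G e -> u (pt G e t) <= phie t) ->
  forall eps, 0 < eps -> exists delta, 0 < delta /\ forall h, 0 < h < delta -> h < len G e ->
    u (PE e (toward v e h)) <= u (PV v) + h * ingoing_deriv G v e phie1 + eps * h.
Proof.
  intros Hi HC Hv Hb eps He. pose proof Hi as [He' _]. pose proof (len_pos e He').
  assert (Hvc : 0 <= vcoord G v e <= len G e) by (unfold vcoord; destruct Nat.eq_dec; lra).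
  destruct (HC _ Hvc) as [Hd _].
  destruct (is_derive_upper _ _ _ Hd eps He) as [d [Hd0 Hd1]].
  exists d. split; auto. intros h Hh Hhl.
  pose proof (toward_range v e h ltac:(lra)).
  rewrite <- (pt_in e (toward v e h)) by lra.
  eapply Rle_trans; [apply Hb; lra|].
  unfold toward, ingoing_deriv, vcoord in *. destruct Nat.eq_dec.
  - specialize (Hd1 h). rewrite Rplus_0_l in Hd1. rewrite Rabs_right in Hd1 by lra.
    rewrite <- Hv. assert (phie h <= phie 0 + phie1 0 * h + eps * h) by (apply Hd1; lra). nra.
  - specialize (Hd1 (- h)). rewrite Rabs_Ropp, Rabs_right in Hd1 by lra.
    replace (len G e - h) with (len G e + - h) by ring. rewrite <- Hv.
    assert (phie (len G e + - h) <= phie (len G e) + phie1 (len G e) * - h + eps * h) by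
        (apply Hd1; lra).
    nra.
Qed.

Lemma convex_vertex_test : forall v e f, interior_vertex G v -> incident G v e -> incident G v f ->
     e <> f ->
     forall phie phie1 phif phif1,
       C1_on_closed 0 (len G e) phie phie1 ->
       C1_on_closed 0 (len G f) phif phif1 ->
       phie (vcoord G v e) = u (PV v) -> phif (vcoord G v f) = u (PV v) ->
       (forall t, 0 <= t <= len G e -> u (pt G e t) <= phie t) ->
       (forall t, 0 <= t <= len G f -> u (pt G f t) <= phif t) ->
       0 <= ingoing_deriv G v e phie1 + ingoing_deriv G v f phif1.
Proof.
  intros v e f [Hv _] Hie Hif Hef phie phie1 phif phif1 HCe HCf Hve Hvf Hbe Hbf.
  set (De := ingoing_deriv G v e phie1). set (Df := ingoing_deriv G v f phif1).
  destruct (Rle_lt_dec 0 (De + Df)) as [|HD]; auto. exfalso.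
  set (eps := - (De + Df) / 4).
  assert (Heps : 0 < eps) by (unfold eps; lra).
  destruct (toward_upper_bound v e phie phie1 Hie HCe Hve Hbe eps Heps) as [de [Hde Hse]].
  destruct (toward_upper_bound v f phif phif1 Hif HCf Hvf Hbf eps Heps) as [df [Hdf Hsf]].
  pose proof Hie as [He _]. pose proof Hif as [Hf _].
  pose proof (len_pos e He). pose proof (len_pos f Hf).
  set (h := Rmin (Rmin de df) (Rmin (len G e) (len G f)) / 3).
  pose proof (Rmin_l (Rmin de df) (Rmin (len G e) (len G f))).
  pose proof (Rmin_r (Rmin de df) (Rmin (len G e) (len G f))).
  pose proof (Rmin_l de df). pose proof (Rmin_r de df).
  pose proof (Rmin_l (len G e) (len G f)). pose proof (Rmin_r (len G e) (len G f)).
  assert (0 < Rmin (Rmin de df) (Rmin (len G e) (len G f))) by (repeat apply Rmin_glb_lt; auto).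
  assert (Hh : 0 < h /\ h < de /\ h < df /\ h <= len G e / 2 /\ h <= len G f / 2) by
      (unfold h; lra).
  set (x := PE e (toward v e h)). set (y := PE f (toward v f h)).
  pose proof (toward_range v e h ltac:(lra)). pose proof (toward_range v f h ltac:(lra)).
  assert (Dxz : dist G x (PV v) = h) by (apply dist_toward; auto; lra).
  assert (Dzy : dist G (PV v) y = h) by (rewrite dist_sym; apply dist_toward; auto; lra).
  assert (Dxy : dist G x y = 2 * h) by (apply dist_toward_toward; auto; lra).
  (* [v] is the midpoint of [x] and [y] *)
  pose proof (Hconv x y (PV v)) as K.
  rewrite (dist_sym y), Dxz, Dzy, Dxy in K.
  replace (h / (2 * h)) with (/ 2) in K by (field; lra).
  assert (Hmid : u (PV v) <= / 2 * u x + / 2 * u y).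
  { apply K; unfold x, y; simpl; auto; try (split; auto; lra).
    - intro E; inversion E; congruence.
    - unfold in_segment. fold x y. rewrite Dxz, Dzy, Dxy. ring. }
  pose proof (Hse h ltac:(lra) ltac:(lra)) as Hux. pose proof (Hsf h ltac:(lra) ltac:(lra)) as Huy.
  fold x De in Hux. fold y Df in Huy. unfold eps in *. nra.
Qed.

Lemma convex_viscosity : viscosity_subsolution G u.
Proof.
  split; [apply convex_usc|]. split.
  - intros. eapply convex_edge_test; eauto.
  - intros. eapply convex_vertex_test; eauto.
Qed.

End Convex.

(** * Tracks *)

(* [(e, a, b)] is the part of edge [e] traversed from coordinate [a] to coordinate [b]; a
   track is a list of such segments, each starting where the previous one ends. *)
Definition seg := (nat * R * R)%type.

Definition dir (a b : R) : R := if Rle_dec a b then 1 else -1.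

Lemma dir_abs a b : dir a b * Rabs (b - a) = b - a.
Proof. unfold dir; destruct Rle_dec; split_Rabs; lra. Qed.

Lemma dir_cases a b : dir a b = 1 \/ dir a b = -1.
Proof. unfold dir; destruct Rle_dec; auto. Qed.

Lemma dir_coord_range a b L s : 0 <= a <= L -> 0 <= b <= L -> 0 <= s <= Rabs (b - a) ->
  0 <= a + dir a b * s <= L.
Proof. intros. unfold dir in *; destruct Rle_dec; split_Rabs; nra. Qed.

Lemma dir_coord_range_strict a b L s : 0 <= a <= L -> 0 <= b <= L -> 0 < s < Rabs (b - a) ->
  0 < a + dir a b * s < L.
Proof. intros. unfold dir in *; destruct Rle_dec; split_Rabs; nra. Qed.

Lemma dir_eq a b a' b' : a <> b -> a' <> b' -> (b - a) * (b' - a') > 0 -> dir a b = dir a' b'.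
Proof. intros. unfold dir; destruct Rle_dec; destruct Rle_dec; auto; exfalso; nra. Qed.

Ltac subst_sets := repeat match goal with x := _ |- _ => subst x end.

Definition seg_ok (s : seg) : Prop :=
  let '(e, a, b) := s in (e < nE G)%nat /\ 0 <= a <= len G e /\ 0 <= b <= len G e /\ a <> b.

Fixpoint track_len (T : list seg) : R :=
  match T with nil => 0 | (e, a, b) :: T' => Rabs (b - a) + track_len T' end.

Fixpoint track (p : point) (T : list seg) (q : point) : Prop :=
  match T with
  | nil => p = q
  | (e, a, b) :: T' => seg_ok (e, a, b) /\ pt G e a = p /\ track (pt G e b) T' q
  end.

Fixpoint no_backtrack (T : list seg) : Prop :=
  match T with
  | (e, a, b) :: (((e', a', b') :: _) as T') =>
      (e <> e' \/ (b - a) * (b' - a') > 0) /\ no_backtrack T'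
  | _ => True
  end.

Fixpoint vertex_joints (T : list seg) : Prop :=
  match T with
  | (e, a, b) :: ((_ :: _) as T') => (b = 0 \/ b = len G e) /\ vertex_joints T'
  | _ => True
  end.

Fixpoint ends_at_vertex (T : list seg) : Prop :=
  match T with
  | nil => True
  | (e, a, b) :: nil => b = 0 \/ b = len G e
  | _ :: T' => ends_at_vertex T'
  end.

Definition full_edge (s : seg) : Prop :=
  let '(e, a, b) := s in (a = 0 \/ a = len G e) /\ (b = 0 \/ b = len G e).

Lemma track_len_app T1 T2 : track_len (T1 ++ T2) = track_len T1 + track_len T2.
Proof. induction T1 as [|[[e a] b] T1 IH]; simpl; [ring|rewrite IH; ring]. Qed.

Lemma track_len_nonneg T : 0 <= track_len T.
Proof. induction T as [|[[e a] b] T IH]; simpl; [lra|pose proof (Rabs_pos (b - a)); lra]. Qed.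

Lemma track_app p m q T1 T2 : track p T1 m -> track m T2 q -> track p (T1 ++ T2) q.
Proof.
  revert p. induction T1 as [|[[e a] b] T1 IH]; simpl; intros p H1 H2.
  - subst; auto.
  - destruct H1 as [H1 [H1' H1'']]. split; [auto|split; [auto|]]. eapply IH; eauto.
Qed.

Lemma track_app_inv p q T1 T2 : track p (T1 ++ T2) q -> exists m, track p T1 m /\ track m T2 q.
Proof.
  revert p. induction T1 as [|[[e a] b] T1 IH]; simpl; intros p H.
  - exists p; auto.
  - destruct H as [H1 [H2 H3]]. destruct (IH _ H3) as [m [Hm1 Hm2]]. exists m; auto.
Qed.

Lemma vertex_joints_app T1 T2 : vertex_joints T1 -> vertex_joints T2 -> ends_at_vertex T1 ->
  vertex_joints (T1 ++ T2).
Proof.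
  induction T1 as [|[[e a] b] T1 IH]; simpl; intros H1 H2 H3; auto.
  destruct T1 as [|s1 T1].
  - simpl. destruct T2; auto.
  - destruct H1 as [H1 H1']. change ((b = 0 \/ b = len G e) /\ vertex_joints ((s1 :: T1) ++ T2)).
    split; auto.
Qed.

Lemma vertex_joints_app_inv T1 T2 : vertex_joints (T1 ++ T2) -> T1 <> nil -> T2 <> nil ->
  ends_at_vertex T1 /\ vertex_joints T1 /\ vertex_joints T2.
Proof.
  induction T1 as [|[[e a] b] T1 IH]; intros H Hn1 Hn2; [congruence|].
  destruct T1 as [|s1 T1].
  - destruct T2 as [|s2 T2]; [congruence|]. simpl in H. destruct H as [H H']. simpl. auto.
  - simpl in H. destruct H as [H H']. destruct (IH H' ltac:(congruence) Hn2) as [A [B C]].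
    split; [|split]; auto. simpl. auto.
Qed.

Lemma full_edge_vertex_joints T : List.Forall full_edge T -> vertex_joints T /\ ends_at_vertex T.
Proof.
  induction 1 as [|[[e a] b] T Hs HT IH]; simpl; auto.
  destruct Hs as [_ Hb]. destruct T as [|s T]; simpl; auto. destruct IH; split; auto.
Qed.

Lemma track_end_vertex p T m : track p T m -> ends_at_vertex T -> T <> nil -> exists v, m = PV v.
Proof.
  revert p. induction T as [|[[e a] b] T IH]; intros p H Hv Hn; [congruence|].
  simpl in H. destruct H as [[He [Ha [Hb Hab]]] [Hp HT]].
  destruct T as [|s T].
  - simpl in HT. subst m. simpl in Hv. destruct Hv as [->| ->].
    + exists (src G e). apply pt_src.
    + exists (tgt G e). apply pt_tgt. apply len_pos; auto.
  - apply (IH _ HT); auto. congruence.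
Qed.

Lemma walk_to_track v w r : walk G v w r ->
  exists T, track (PV v) T (PV w) /\ track_len T = r /\ List.Forall full_edge T.
Proof.
  induction 1 as [v Hv|v w e r He Hs Hw IH|v w e r He Ht Hw IH].
  - exists nil. simpl. auto.
  - destruct IH as [T [H1 [H2 H3]]]. pose proof (len_pos e He).
    exists ((e, 0, len G e) :: T). simpl. repeat split; auto; try lra.
    + rewrite pt_src. congruence.
    + rewrite pt_tgt by auto. auto.
    + rewrite H2. rewrite Rminus_0_r, Rabs_right by lra. auto.
    + constructor; auto. simpl. auto.
  - destruct IH as [T [H1 [H2 H3]]]. pose proof (len_pos e He).
    exists ((e, len G e, 0) :: T). simpl. repeat split; auto; try lra.
    + rewrite pt_tgt by auto. congruence.
    + rewrite pt_src. auto.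
    + rewrite H2. rewrite Rminus_0_l, Rabs_Ropp, Rabs_right by lra. auto.
    + constructor; auto. simpl. auto.
Qed.

Lemma exit_to_track x v a : valid_point G x -> exit_to G x v a ->
  exists T, track x T (PV v) /\ track_len T = a /\ vertex_joints T /\ ends_at_vertex T.
Proof.
  intros Hx Hex. destruct x as [w|e t]; simpl in Hex.
  - destruct Hex as [-> ->]. exists nil. simpl. auto.
  - destruct Hx as [He Ht]. destruct Hex as [[-> ->]|[-> ->]].
    + exists ((e, t, 0) :: nil). simpl. repeat split; auto; try lra.
      * rewrite pt_in by lra. auto.
      * apply pt_src.
      * split_Rabs; lra.
    + exists ((e, t, len G e) :: nil). simpl. repeat split; auto; try lra.
      * rewrite pt_in by lra. auto.
      * apply pt_tgt; lra.
      * split_Rabs; lra.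
Qed.

Lemma enter_to_track y v b : valid_point G y -> exit_to G y v b ->
  exists T, track (PV v) T y /\ track_len T = b /\ vertex_joints T.
Proof.
  intros Hy Hex. destruct y as [w|e t]; simpl in Hex.
  - destruct Hex as [-> ->]. exists nil. simpl. auto.
  - destruct Hy as [He Ht]. destruct Hex as [[-> ->]|[-> ->]].
    + exists ((e, 0, t) :: nil). simpl. repeat split; auto; try lra.
      * apply pt_src.
      * rewrite pt_in by lra. auto.
      * split_Rabs; lra.
    + exists ((e, len G e, t) :: nil). simpl. repeat split; auto; try lra.
      * apply pt_tgt; lra.
      * rewrite pt_in by lra. auto.
      * split_Rabs; lra.
Qed.

Lemma path_length_to_track x y r : valid_point G x -> valid_point G y -> x <> y ->
  path_length G x y r ->
  exists T, track x T y /\ track_len T = r /\ vertex_joints T.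
Proof.
  intros Hx Hy Hne [[vx [vy [a [b [r' [H1 [H2 [H3 ->]]]]]]]]|[e [t [s [-> [-> ->]]]]]].
  - destruct (exit_to_track x vx a Hx H1) as [T1 [A1 [B1 [C1 D1]]]].
    destruct (walk_to_track vx vy r' H3) as [T2 [A2 [B2 C2]]].
    destruct (enter_to_track y vy b Hy H2) as [T3 [A3 [B3 C3]]].
    destruct (full_edge_vertex_joints T2 C2) as [V2 E2].
    exists (T1 ++ (T2 ++ T3)). split; [|split].
    + eapply track_app; eauto. eapply track_app; eauto.
    + rewrite !track_len_app. lra.
    + apply vertex_joints_app; auto. apply vertex_joints_app; auto.
  - simpl in Hx, Hy. destruct Hx as [He Ht]. destruct Hy as [_ Hs].
    exists ((e, t, s) :: nil). simpl. repeat split; auto; try lra.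
    + intro E; apply Hne; subst; auto.
    + rewrite pt_in by lra. auto.
    + rewrite pt_in by lra. auto.
    + rewrite Rabs_minus_sym. ring.
Qed.

(* A backtracking pair of segments on one edge merges into a single shorter segment. *)
Lemma cons_no_backtrack n : forall T0, (length T0 <= n)%nat -> forall e a b q,
  seg_ok (e, a, b) -> track (pt G e b) T0 q -> no_backtrack T0 -> vertex_joints ((e, a, b) :: T0) ->
  exists T, track (pt G e a) T q /\ no_backtrack T /\ track_len T <= Rabs (b - a) + track_len T0 /\
      vertex_joints T.
Proof.
  induction n as [|n IH]; intros T0 HlenT e a b q Hs Ht Hnb Hvj.
  - destruct T0; [|simpl in HlenT; lia]. exists ((e, a, b) :: nil).
    split; [simpl; split; [exact Hs|split; [auto|exact Ht]]|]. simpl.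
    split; [auto|split; [lra|auto]].
  - destruct T0 as [|[[e' a'] b'] T1].
    + exists ((e, a, b) :: nil).
      split; [simpl; split; [exact Hs|split; [auto|exact Ht]]|]. simpl.
      split; [auto|split; [lra|auto]].
    + destruct (classic (e <> e' \/ (b - a) * (b' - a') > 0)) as [Hok|Hbad].
      * exists ((e, a, b) :: (e', a', b') :: T1). split; [|split; [|split]]; auto.
        -- simpl. simpl in Ht. split; auto.
        -- change ((e <> e' \/ (b - a) * (b' - a') > 0) /\ no_backtrack ((e', a', b') :: T1)).
           split; auto.
        -- simpl track_len. lra.
      * assert (Hee : e = e') by (apply NNPP; intro; apply Hbad; auto).
        assert (Hdir : (b - a) * (b' - a') <= 0) by
            (destruct (Rle_lt_dec ((b - a) * (b' - a')) 0); auto; exfalso; apply Hbad; auto).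
        subst e'. simpl in Ht. destruct Ht as [[He [Ha' [Hb' Hab']]] [Hpt Ht1]].
        destruct Hs as [_ [Ha [Hb Hab]]].
        assert (a' = b) by (apply (pt_inj e); auto). subst a'.
        assert (Hnb1 : no_backtrack T1) by
            (destruct T1 as [|[[e2 a2] b2] T2]; simpl in Hnb; [auto|tauto]).
        destruct (Req_dec a b') as [Eab|Nab].
        -- subst b'. exists T1. split; [auto|split; [auto|split]].
           ++ simpl track_len. pose proof (Rabs_pos (b - a)); pose proof (Rabs_pos (a - b)); lra.
           ++ simpl in Hvj. destruct T1; simpl; auto; tauto.
        -- assert (P1 : seg_ok (e, a, b')) by (simpl; repeat split; auto; lra).
           assert (P2 : vertex_joints ((e, a, b') :: T1)) by
               (simpl in Hvj; destruct T1 as [|s1 T1]; simpl; auto; tauto).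
           destruct (IH T1 ltac:(simpl in HlenT; lia) e a b' q P1 Ht1 Hnb1 P2) as [T [A [B [C D]]]].
           exists T. split; auto. split; auto. split; auto. simpl track_len.
           assert (Rabs (b' - a) <= Rabs (b - a) + Rabs (b' - b)) by (split_Rabs; lra). lra.
Qed.

Lemma track_reduce T : forall p q, track p T q -> vertex_joints T ->
  exists T', track p T' q /\ no_backtrack T' /\ track_len T' <= track_len T /\ vertex_joints T' /\
      (T = nil -> T' = nil).
Proof.
  induction T as [|[[e a] b] T IH]; intros p q H Hv.
  - exists nil. simpl in *. repeat split; auto; lra.
  - simpl in H. destruct H as [Hs [Hp HT]].
    assert (HvT : vertex_joints T) by (destruct T; simpl in Hv; [auto|tauto]).
    destruct (IH _ _ HT HvT) as [T0 [A [B [C [D E]]]]].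
    assert (Hv0 : vertex_joints ((e, a, b) :: T0)).
    { destruct T0 as [|s0 T0]; simpl; auto. destruct T as [|s T].
      - specialize (E eq_refl). congruence.
      - simpl in Hv. split; [tauto|auto]. }
    destruct (cons_no_backtrack (length T0) T0 (le_n _) e a b q Hs A B Hv0) as
        [T' [A' [B' [C' D']]]].
    exists T'. subst p. split; auto. split; auto. split; [simpl track_len; lra|]. split; auto.
    congruence.
Qed.

(* The point at arclength [s] along [T]; [PV 0] is a junk value for the empty track. *)
Fixpoint track_pos (T : list seg) (s : R) : point :=
  match T with
  | nil => PV 0
  | (e, a, b) :: T' =>
      if Rle_dec s (Rabs (b - a)) then pt G e (a + dir a b * s)
      else track_pos T' (s - Rabs (b - a))
  end.

(* The arclengths at which [T] passes from one segment to the next. *)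
Fixpoint joints (T : list seg) : list R :=
  match T with
  | nil => nil
  | (e, a, b) :: T' =>
      match T' with
      | nil => nil
      | _ => Rabs (b - a) :: map (Rplus (Rabs (b - a))) (joints T')
      end
  end.

Lemma track_pos_first e a b T' s : s <= Rabs (b - a) ->
  track_pos ((e, a, b) :: T') s = pt G e (a + dir a b * s).
Proof. intros H. simpl. destruct Rle_dec; [auto|lra]. Qed.

Lemma track_pos_rest p q e a b T' s : track p ((e, a, b) :: T') q -> T' <> nil ->
  Rabs (b - a) <= s ->
  track_pos ((e, a, b) :: T') s = track_pos T' (s - Rabs (b - a)).
Proof.
  intros H Hn Hs. simpl. destruct Rle_dec as [Hl|Hl]; auto.
  assert (s = Rabs (b - a)) by lra. subst s. rewrite Rminus_diag.
  destruct T' as [|[[e' a'] b'] T'']; [congruence|]. simpl.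
  destruct Rle_dec as [_|Hl']; [|exfalso; pose proof (Rabs_pos (b' - a')); lra].
  rewrite Rmult_0_r, Rplus_0_r. rewrite dir_abs. replace (a + (b - a)) with b by ring.
  simpl in H. destruct H as [_ [_ [_ [H _]]]]. auto.
Qed.

Lemma track_valid p T q : track p T q -> T <> nil -> valid_point G p /\ valid_point G q.
Proof.
  revert p. induction T as [|[[e a] b] T IH]; intros p H Hn; [congruence|].
  simpl in H. destruct H as [[He [Ha [Hb Hab]]] [Hp HT]]. subst p.
  split; [apply pt_valid; auto|].
  destruct T as [|s T]. simpl in HT. subst. apply pt_valid; auto.
  apply (IH _ HT). congruence.
Qed.

Lemma seg_len_pos p e a b T q : track p ((e, a, b) :: T) q -> 0 < Rabs (b - a).
Proof. intros [[_ [_ [_ H]]] _]. apply Rabs_pos_lt. lra. Qed.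

Lemma track_pos_0 p T q : track p T q -> T <> nil -> track_pos T 0 = p.
Proof.
  destruct T as [|[[e a] b] T]; intros H Hn; [congruence|].
  rewrite track_pos_first by (apply Rabs_pos). rewrite Rmult_0_r, Rplus_0_r. apply H.
Qed.

Lemma track_pos_end p T q : track p T q -> T <> nil -> track_pos T (track_len T) = q.
Proof.
  revert p. induction T as [|[[e a] b] T IH]; intros p H Hn; [congruence|].
  destruct T as [|s T].
  - simpl track_len. rewrite Rplus_0_r. rewrite track_pos_first by lra. rewrite dir_abs.
    replace (a + (b - a)) with b by ring. simpl in H. tauto.
  - change (track_len ((e, a, b) :: s :: T)) with (Rabs (b - a) + track_len (s :: T)).
    rewrite (track_pos_rest p q) by
        (auto; try congruence; pose proof (track_len_nonneg (s :: T)); lra).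
    replace (Rabs (b - a) + track_len (s :: T) - Rabs (b - a)) with (track_len (s :: T)) by ring.
    apply (IH (pt G e b)). simpl in H; tauto. congruence.
Qed.

Lemma track_pos_dist p T q : track p T q -> T <> nil -> forall s, 0 <= s <= track_len T ->
  valid_point G (track_pos T s) /\ dist G p (track_pos T s) <= s /\ dist G (track_pos T s) q <=
      track_len T - s.
Proof.
  revert p. induction T as [|[[e a] b] T IH]; intros p H Hn s Hs; [congruence|].
  pose proof (track_valid _ _ _ H Hn) as [Vp Vq].
  pose proof H as [[He [Ha [Hb Hab]]] [Hp HT]]. subst p.
  set (l := Rabs (b - a)). assert (Hl : 0 < l) by (apply Rabs_pos_lt; lra).
  assert (Vb : valid_point G (pt G e b)) by (apply pt_valid; auto).
  assert (Hbq : dist G (pt G e b) q <= track_len T).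
  { destruct T as [|s' T']. simpl in HT. subst q. rewrite dist_self by auto. simpl; lra.
    destruct (IH _ HT ltac:(congruence) 0) as [_ [_ H3]]. split; [lra|apply track_len_nonneg].
    rewrite (track_pos_0 _ _ _ HT) in H3 by congruence. lra. }
  simpl track_len in Hs |- *. fold l in Hs |- *.
  destruct (Rle_lt_dec s l) as [Hsl|Hsl].
  - rewrite track_pos_first by auto.
    assert (Hc : 0 <= a + dir a b * s <= len G e) by (apply dir_coord_range; auto; fold l; lra).
    assert (Vc : valid_point G (pt G e (a + dir a b * s))) by (apply pt_valid; auto).
    split; [auto|split].
    + rewrite dist_pt_pt by auto. replace (a - (a + dir a b * s)) with (- (dir a b * s)) by ring.
      rewrite Rabs_Ropp, Rabs_mult. destruct (dir_cases a b) as [E|E]; rewrite E; split_Rabs; lra.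
    + eapply Rle_trans; [apply (dist_triangle _ (pt G e b)); auto|].
      rewrite dist_pt_pt by auto.
      assert (Rabs (a + dir a b * s - b) = l - s).
      { unfold l in *. unfold dir; destruct Rle_dec; split_Rabs; lra. }
      lra.
  - destruct T as [|s' T']. simpl track_len in Hs. lra.
    rewrite (track_pos_rest (pt G e a) q) by (auto; try congruence; unfold l in *; lra). fold l.
    destruct (IH _ HT ltac:(congruence) (s - l)) as [A [B C]]; [lra|].
    split; [auto|split].
    + eapply Rle_trans; [apply (dist_triangle _ (pt G e b)); auto|].
      rewrite dist_pt_pt by auto. fold l. rewrite Rabs_minus_sym. fold l. lra.
    + lra.
Qed.

Lemma dist_le_track_len p T q : track p T q -> T <> nil -> dist G p q <= track_len T.
Proof.
  intros H Hn. destruct (track_pos_dist p T q H Hn 0) as [_ [_ C]].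
  split; [lra|apply track_len_nonneg].
  rewrite (track_pos_0 _ _ _ H Hn) in C. lra.
Qed.

Lemma dist_le_track_len' p T q : track p T q -> valid_point G p -> dist G p q <= track_len T.
Proof.
  intros H Vp. destruct T as [|s T].
  - simpl in H. subst q. rewrite dist_self by auto. simpl; lra.
  - apply (dist_le_track_len p _ q H). congruence.
Qed.

Lemma joints_range p T q : track p T q -> forall x, In x (joints T) -> 0 <= x <= track_len T.
Proof.
  revert p. induction T as [|[[e a] b] T IH]; intros p H x Hx; simpl in Hx; [contradiction|].
  destruct T as [|s T]; [contradiction|].
  simpl in H. destruct H as [_ [_ HT]]. pose proof (track_len_nonneg (s :: T)).
  pose proof (Rabs_pos (b - a)).
  change (track_len ((e, a, b) :: s :: T)) with (Rabs (b - a) + track_len (s :: T)).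
  destruct Hx as [<-|Hx]. lra.
  apply in_map_iff in Hx. destruct Hx as [y [<- Hy]]. specialize (IH _ HT y Hy). lra.
Qed.

(* Just before arclength [s0] the track runs along edge [e1] in direction [s1], just after
   along [e2] in direction [s2]; it keeps its direction on a common edge, and crosses [s0]
   inside a single edge when [s0] is not a joint. *)
Definition local_chart (T : list seg) (L s0 : R) : Prop :=
  exists d e1 s1 t1 e2 s2 t2, 0 < d /\ (e1 < nE G)%nat /\ (e2 < nE G)%nat /\
    (s1 = 1 \/ s1 = -1) /\ (s2 = 1 \/ s2 = -1) /\
    track_pos T s0 = pt G e1 t1 /\ track_pos T s0 = pt G e2 t2 /\
    (forall s, s0 - d <= s <= s0 -> 0 <= s ->
       track_pos T s = pt G e1 (t1 - s1 * (s0 - s)) /\ 0 <= t1 - s1 * (s0 - s) <= len G e1) /\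
    (forall s, s0 <= s <= s0 + d -> s <= L ->
       track_pos T s = pt G e2 (t2 + s2 * (s - s0)) /\ 0 <= t2 + s2 * (s - s0) <= len G e2) /\
    (0 < s0 < L -> e1 = e2 -> s1 = s2) /\
    (0 < s0 < L -> ~ In s0 (joints T) -> e1 = e2 /\ s1 = s2 /\ t1 = t2 /\ 0 < t1 < len G e1).

Lemma local_chart_head p q e a b T s0 : track p ((e, a, b) :: T) q ->
  T = nil \/ s0 < Rabs (b - a) -> 0 <= s0 <= track_len ((e, a, b) :: T) ->
  local_chart ((e, a, b) :: T) (track_len ((e, a, b) :: T)) s0.
Proof.
  intros H Hcase Hs0. pose proof H as [[He [Ha [Hb Hab]]] _].
  set (l := Rabs (b - a)) in *. assert (Hl : 0 < l) by (apply Rabs_pos_lt; lra).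
  set (sgm := dir a b).
  assert (Hcoord : forall s, 0 <= s <= l -> 0 <= a + sgm * s <= len G e)
    by (intros; apply dir_coord_range; auto).
  simpl track_len in Hs0 |- *. fold l in Hs0 |- *.
  set (d := if Rlt_dec s0 l then l - s0 else 1).
  assert (Hd : 0 < d) by (unfold d; destruct Rlt_dec; lra).
  assert (Hdr : forall s, s0 <= s <= s0 + d -> s <= l + track_len T -> s <= l).
  { intros s Hs1 Hs2. unfold d in Hs1. destruct Rlt_dec; [lra|].
    destruct Hcase as [->|]; [simpl in Hs2; lra|lra]. }
  assert (Hs0l : s0 <= l) by (destruct Hcase as [->|]; [simpl in Hs0; lra|lra]).
  exists d, e, sgm, (a + sgm * s0), e, sgm, (a + sgm * s0).
  split; [auto|split; [auto|split; [auto|split; [apply dir_cases|split; [apply dir_cases|]]]]].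
  split; [apply track_pos_first; subst_sets; lra|split; [apply track_pos_first; subst_sets; lra|]].
  split; [|split; [|split]].
  - intros s Hs1 Hs2. rewrite track_pos_first by (subst_sets; lra).
    replace (a + sgm * s0 - sgm * (s0 - s)) with (a + sgm * s) by ring.
    split; auto. apply Hcoord; lra.
  - intros s Hs1 Hs2. specialize (Hdr s Hs1 Hs2). rewrite track_pos_first by (subst_sets; lra).
    replace (a + sgm * s0 + sgm * (s - s0)) with (a + sgm * s) by ring.
    split; auto. apply Hcoord; lra.
  - auto.
  - intros Hs Hnin. split; auto. split; auto. split; auto. apply dir_coord_range_strict; auto.
    split; [lra|]. fold l. destruct Hcase as [->|]; [simpl in Hs; lra|lra].
Qed.

Lemma local_chart_junction p q e a b e' a' b' T :
  track p ((e, a, b) :: (e', a', b') :: T) q -> no_backtrack ((e, a, b) :: (e', a', b') :: T) ->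
  local_chart ((e, a, b) :: (e', a', b') :: T) (track_len ((e, a, b) :: (e', a', b') :: T))
    (Rabs (b - a)).
Proof.
  intros H Hnb. pose proof H as [[He [Ha [Hb Hab]]] [Hp HT]].
  pose proof HT as [[He' [Ha' [Hb' Hab']]] [Hp' HT']].
  set (l := Rabs (b - a)). assert (Hl : 0 < l) by (apply Rabs_pos_lt; lra).
  set (l' := Rabs (b' - a')). assert (Hl' : 0 < l') by (apply Rabs_pos_lt; lra).
  set (sgm := dir a b).
  assert (Hcoord : forall s, 0 <= s <= l -> 0 <= a + sgm * s <= len G e)
    by (intros; apply dir_coord_range; auto).
  assert (Hlen : track_len ((e, a, b) :: (e', a', b') :: T) = l + track_len ((e', a', b') :: T))
    by reflexivity.
  rewrite Hlen. set (d := Rmin l l').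
  assert (Hd : 0 < d) by (apply Rmin_glb_lt; auto).
  pose proof (Rmin_l l l'). pose proof (Rmin_r l l').
  assert (Hbend : a + sgm * l = b) by (unfold sgm, l; rewrite dir_abs; ring).
  exists d, e, sgm, b, e', (dir a' b'), a'.
  split; [auto|split; [auto|split; [auto|split; [apply dir_cases|split; [apply dir_cases|]]]]].
  split; [rewrite track_pos_first by (subst_sets; lra); fold sgm; rewrite Hbend; auto|].
  split; [rewrite (track_pos_rest p q) by (auto; try congruence; subst_sets; lra); rewrite
      Rminus_diag;
          rewrite track_pos_first by (subst_sets; lra); rewrite Rmult_0_r, Rplus_0_r; auto|].
  split; [|split; [|split]].
  - intros s Hs1 Hs2. rewrite track_pos_first by (subst_sets; lra).
    replace (b - sgm * (l - s)) with (a + sgm * s) by (rewrite <- Hbend; ring).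
    split; auto. apply Hcoord. unfold d in Hs1. lra.
  - intros s Hs1 Hs2. rewrite (track_pos_rest p q) by (auto; try congruence; subst_sets; lra).
    unfold d in Hs1. rewrite track_pos_first by (subst_sets; lra).
    split; auto. apply dir_coord_range; auto. fold l'. lra.
  - intros _ Hee. subst e'. simpl in Hnb. destruct Hnb as [[Hne|Hpos] _]; [congruence|].
    unfold sgm. apply dir_eq; auto.
  - intros _ Hnin. exfalso. apply Hnin. simpl. left. auto.
Qed.

Lemma local_chart_shift p q e a b T s0 : track p ((e, a, b) :: T) q -> T <> nil ->
  Rabs (b - a) < s0 -> local_chart T (track_len T) (s0 - Rabs (b - a)) ->
  local_chart ((e, a, b) :: T) (track_len ((e, a, b) :: T)) s0.
Proof.
  intros H Hn Hgt
    [d [e1 [s1 [t1 [e2 [s2 [t2 [Hd [He1 [He2 [Hs1 [Hs2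
     [P1 [P2 [Left [Right [Nb Jn]]]]]]]]]]]]]]]]].
  set (l := Rabs (b - a)) in *.
  assert (Hlen : track_len ((e, a, b) :: T) = l + track_len T) by reflexivity.
  rewrite Hlen.
  set (d' := Rmin d (s0 - l)). assert (Hd' : 0 < d') by (apply Rmin_glb_lt; lra).
  pose proof (Rmin_l d (s0 - l)). pose proof (Rmin_r d (s0 - l)).
  assert (Hrest : forall s, l <= s -> track_pos ((e, a, b) :: T) s = track_pos T (s - l))
    by (intros s Hs; apply (track_pos_rest p q); auto).
  exists d', e1, s1, t1, e2, s2, t2.
  split; [auto|split; [auto|split; [auto|split; [auto|split; [auto|]]]]].
  split; [rewrite Hrest by lra; auto|split; [rewrite Hrest by lra; auto|]].
  split; [|split; [|split]].
  - intros s Hs1' Hs2'. rewrite Hrest by (unfold d' in Hs1'; lra).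
    replace (s0 - s) with ((s0 - l) - (s - l)) by ring. apply Left; unfold d' in Hs1'; lra.
  - intros s Hs1' Hs2'. rewrite Hrest by lra.
    replace (s - s0) with ((s - l) - (s0 - l)) by ring. apply Right; unfold d' in Hs1'; lra.
  - intros Hs. apply Nb. lra.
  - intros Hs Hnin. apply Jn; [lra|]. intro Hin. apply Hnin.
    destruct T as [|s' T]; [congruence|]. simpl. right.
    replace s0 with (l + (s0 - l)) by ring. apply in_map. auto.
Qed.

Lemma track_local_chart T : forall p q, track p T q -> no_backtrack T -> T <> nil ->
  forall s0, 0 <= s0 <= track_len T -> local_chart T (track_len T) s0.
Proof.
  induction T as [|[[e a] b] T IH]; intros p q H Hnb Hn s0 Hs0; [congruence|].
  destruct (classic (T = nil \/ s0 < Rabs (b - a))) as [Hcase|Hcase].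
  - apply (local_chart_head p q); auto.
  - apply not_or_and in Hcase. destruct Hcase as [HTn Hsl].
    pose proof H as [_ [_ HT]].
    destruct T as [|[[e' a'] b'] T']; [congruence|].
    destruct (Req_dec s0 (Rabs (b - a))) as [->|Hneq].
    + apply (local_chart_junction p q); auto.
    + apply (local_chart_shift p q); auto; [lra|].
      apply (IH (pt G e b) q HT); [simpl in Hnb; tauto|congruence|].
      simpl track_len in *. lra.
Qed.

Lemma chart_two_sided T L s0 d e t sg :
  (forall s, s0 - d <= s <= s0 -> 0 <= s ->
     track_pos T s = pt G e (t - sg * (s0 - s)) /\ 0 <= t - sg * (s0 - s) <= len G e) ->
  (forall s, s0 <= s <= s0 + d -> s <= L ->
     track_pos T s = pt G e (t + sg * (s - s0)) /\ 0 <= t + sg * (s - s0) <= len G e) ->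
  forall s, Rabs (s - s0) <= d -> 0 <= s <= L -> track_pos T s = pt G e (t + sg * (s - s0)).
Proof.
  intros Left Right s Hs HsL. destruct (Rle_lt_dec s s0).
  - destruct (Left s ltac:(split_Rabs; lra) ltac:(lra)) as [E _]. rewrite E. f_equal. ring.
  - destruct (Right s ltac:(split_Rabs; lra) ltac:(lra)) as [E _]. exact E.
Qed.

Lemma track_pos_app T1 T2 p m : track p T1 m -> T1 <> nil -> forall s, 0 <= s <= track_len T1 ->
  track_pos (T1 ++ T2) s = track_pos T1 s.
Proof.
  revert p. induction T1 as [|[[e a] b] T1 IH]; intros p H Hn s Hs; [congruence|].
  simpl app. simpl. destruct Rle_dec as [Hl|Hl]; auto.
  destruct T1 as [|s1 T1]. simpl in Hs. lra.
  simpl in H. destruct H as [_ [_ HT]]. apply (IH _ HT). congruence.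
  change (track_len ((e, a, b) :: s1 :: T1)) with (Rabs (b - a) + track_len (s1 :: T1)) in Hs. lra.
Qed.

Lemma near_optimal_track p q eps : valid_point G p -> valid_point G q -> p <> q -> 0 < eps ->
  exists T, track p T q /\ no_backtrack T /\ vertex_joints T /\ T <> nil /\ dist G p q <= track_len
      T < dist G p q + eps.
Proof.
  intros Vp Vq Hne He.
  destruct (dist_approx p q eps Vp Vq He) as [r [Pr Hr]].
  destruct (path_length_to_track p q r Vp Vq Hne Pr) as [T0 [A0 [B0 C0]]].
  destruct (track_reduce T0 p q A0 C0) as [T [A [B [C [D _]]]]].
  assert (Hn : T <> nil) by (intro E; subst T; simpl in A; congruence).
  exists T. repeat split; auto. apply (dist_le_track_len p T q A Hn). lra.
Qed.

Lemma first_margin p e a b T q : track p ((e, a, b) :: T) q -> vertex_joints ((e, a, b) :: T) ->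
  Rmin (dist G p q) (Rmin min_len (star_radius p)) <= Rabs (b - a).
Proof.
  intros H Hv.
  pose proof (Rmin_l (dist G p q) (Rmin min_len (star_radius p))).
  pose proof (Rmin_r (dist G p q) (Rmin min_len (star_radius p))).
  pose proof (Rmin_l min_len (star_radius p)). pose proof (Rmin_r min_len (star_radius p)).
  destruct T as [|s T].
  - pose proof (dist_le_track_len p _ q H ltac:(congruence)). simpl in H4. lra.
  - simpl in Hv. destruct Hv as [Hb _].
    pose proof H as [[He [Ha [Hb' Hab]]] [Hp _]]. pose proof (min_len_le e He).
    destruct (pt_cases e a He Ha) as [[-> E]|[[-> E]|[Ha' E]]]; rewrite <- Hp, E in *; simpl
        star_radius in *.
    + destruct Hb as [->| ->]; [lra|]. split_Rabs; lra.
    + destruct Hb as [->| ->]; [|lra]. split_Rabs; lra.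
    + pose proof (Rmin_l a (len G e - a)). pose proof (Rmin_r a (len G e - a)).
      destruct Hb as [->| ->]; split_Rabs; lra.
Qed.

Lemma last_margin p Ta e a b q : track p (Ta ++ (e, a, b) :: nil) q ->
  vertex_joints (Ta ++ (e, a, b) :: nil) ->
  Rmin (dist G p q) (Rmin min_len (star_radius q)) <= Rabs (b - a).
Proof.
  intros H Hv.
  pose proof (Rmin_l (dist G p q) (Rmin min_len (star_radius q))).
  pose proof (Rmin_r (dist G p q) (Rmin min_len (star_radius q))).
  pose proof (Rmin_l min_len (star_radius q)). pose proof (Rmin_r min_len (star_radius q)).
  destruct (track_app_inv p q Ta _ H) as [m [Hm1 Hm2]].
  pose proof Hm2 as [[He [Ha [Hb' Hab]]] [Hpa Hq]]. simpl in Hq.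
  destruct Ta as [|s Ta].
  - simpl in Hm1. subst m. pose proof (dist_le_track_len p _ q Hm2 ltac:(congruence)). simpl in H4.
    lra.
  - destruct (vertex_joints_app_inv _ _ Hv ltac:(congruence) ltac:(congruence)) as [Hend _].
    destruct (track_end_vertex _ _ _ Hm1 Hend ltac:(congruence)) as [v Ev].
    rewrite Ev in Hpa. pose proof (min_len_le e He).
    destruct (pt_eq_PV e a v He Ha Hpa) as [[-> _]|[-> _]];
    destruct (pt_cases e b He Hb') as [[-> E]|[[-> E]|[Hb2 E]]]; rewrite <- Hq, E in *; simpl
        star_radius in *;
    try lra; try (split_Rabs; lra);
    pose proof (Rmin_l b (len G e - b)); pose proof (Rmin_r b (len G e - b)); split_Rabs; lra.
Qed.

Lemma no_backtrack_app T1 e a b e' a' b' T2 : no_backtrack (T1 ++ (e, a, b) :: nil) ->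
  no_backtrack ((e', a', b') :: T2) ->
  (e <> e' \/ (b - a) * (b' - a') > 0) -> no_backtrack (T1 ++ (e, a, b) :: (e', a', b') :: T2).
Proof.
  induction T1 as [|[[e1 a1] b1] T1 IH]; intros H1 H2 Hj.
  - simpl. split; auto.
  - destruct T1 as [|[[e2 a2] b2] T1].
    + simpl in *. destruct H1 as [H1 _]. split; auto.
    + simpl in H1 |- *. destruct H1 as [H1 H1']. split; auto. apply IH; auto.
Qed.

Lemma track_len_pos x T y : track x T y -> T <> nil -> 0 < track_len T.
Proof.
  intros Ht Hn. destruct T as [|[[e a] b] T']; [congruence|]. simpl.
  pose proof (seg_len_pos x e a b T' y Ht). pose proof (track_len_nonneg T'). lra.
Qed.

Lemma track_usc (w : point -> R) x T y : usc_on_graph G w -> track x T y -> no_backtrack T ->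
  T <> nil -> usc_on (fun s => w (track_pos T s)) 0 (track_len T).
Proof.
  intros Husc Ht Hnb Hn s0 Hs0 eps Heps.
  destruct (track_local_chart T x y Ht Hnb Hn s0 Hs0) as
    [d [e1 [s1 [t1 [e2 [s2 [t2 [Hd [He1 [He2 [Hs1 [Hs2
     [P1 [P2 [Left [Right [Nb Jn]]]]]]]]]]]]]]]]].
  destruct (track_pos_dist x T y Ht Hn s0 Hs0) as [V0 _].
  destruct (Husc _ V0 eps Heps) as [du [Hdu Hu]].
  exists (Rmin d du). split; [apply Rmin_glb_lt; auto|].
  intros s' Hs' Hss. pose proof (Rmin_l d du). pose proof (Rmin_r d du).
  destruct (Rle_lt_dec s' s0) as [Hle|Hlt].
  - destruct (Left s' ltac:(split_Rabs; lra) ltac:(lra)) as [E1 R1].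
    destruct (Left s0 ltac:(lra) ltac:(lra)) as [_ R0].
    rewrite Rminus_diag, Rmult_0_r, Rminus_0_r in R0.
    rewrite E1. apply Hu. apply pt_valid; auto. rewrite P1. rewrite dist_pt_pt by auto.
    replace (t1 - (t1 - s1 * (s0 - s'))) with (s1 * (s0 - s')) by ring.
    rewrite Rabs_mult. destruct Hs1 as [-> | ->]; split_Rabs; lra.
  - destruct (Right s' ltac:(split_Rabs; lra) ltac:(lra)) as [E1 R1].
    destruct (Right s0 ltac:(lra) ltac:(lra)) as [_ R0].
    rewrite Rminus_diag, Rmult_0_r, Rplus_0_r in R0.
    rewrite E1. apply Hu. apply pt_valid; auto. rewrite P2. rewrite dist_pt_pt by auto.
    replace (t2 - (t2 + s2 * (s' - s0))) with (- (s2 * (s' - s0))) by ring.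
    rewrite Rabs_Ropp, Rabs_mult. destruct Hs2 as [-> | ->]; split_Rabs; lra.
Qed.

Lemma track_vertex_is_joint x T y s0 v : track x T y -> no_backtrack T -> T <> nil ->
  0 < s0 < track_len T -> track_pos T s0 = PV v -> In s0 (joints T).
Proof.
  intros Ht Hnb Hn Hs0 Ev.
  destruct (track_local_chart T x y Ht Hnb Hn s0 ltac:(lra)) as
    [d [e1 [s1 [t1 [e2 [s2 [t2 [Hd [He1 [He2 [Hs1 [Hs2
     [P1 [P2 [Left [Right [Nb Jn]]]]]]]]]]]]]]]]].
  apply NNPP; intro Hnin. destruct (Jn Hs0 Hnin) as [_ [_ [_ Hint]]].
  rewrite P1, pt_in in Ev by lra. discriminate.
Qed.

(* A backtrack at the junction could be cut short by at least [2 m], more than the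
   slack [2 eps] of the two near-optimal tracks, producing a path from [x] to [y]
   shorter than [dist x z + dist z y = dist x y]. *)
Lemma junction_no_backtrack x z y T1 e a b e' a' b' T2 m eps : valid_point G x ->
  track x (T1 ++ (e, a, b) :: nil) z -> track z ((e', a', b') :: T2) y ->
  in_segment G x y z -> m <= Rabs (b - a) -> m <= Rabs (b' - a') -> eps < m ->
  track_len (T1 ++ (e, a, b) :: nil) < dist G x z + eps ->
  track_len ((e', a', b') :: T2) < dist G z y + eps ->
  e <> e' \/ (b - a) * (b' - a') > 0.
Proof.
  intros Vx A1 A2 Hsg M1 M2 Hem E1 E2. unfold in_segment in Hsg.
  destruct (track_app_inv x z T1 _ A1) as [mm [Hm1 Hm2]].
  pose proof Hm2 as [[He1 [Ha [Hb Hab]]] [Hpa Hz]]. simpl in Hz.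
  pose proof A2 as [[He2 [Ha' [Hb' Hab']]] [Hpa' HT2]].
  apply NNPP. intro Hbad. apply not_or_and in Hbad. destruct Hbad as [Hee Hd].
  apply NNPP in Hee. subst e'.
  assert (a' = b) by (apply (pt_inj e); auto; congruence). subst a'.
  assert (Hopp : (b - a) * (b' - b) < 0).
  { assert ((b - a) * (b' - b) <> 0) by (apply Rmult_integral_contrapositive; split; lra). lra. }
  assert (Hshort : exists Ts, track x Ts y /\
                     track_len Ts = track_len T1 + Rabs (b' - a) + track_len T2).
  { destruct (Req_dec a b') as [Eab|Nab].
    - subst b'. exists (T1 ++ T2). split.
      + eapply track_app; eauto. rewrite <- Hpa. auto.
      + rewrite track_len_app. rewrite Rminus_diag, Rabs_R0. ring.
    - exists (T1 ++ (e, a, b') :: T2). split.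
      + eapply track_app; eauto. simpl. split; [repeat split; auto; lra|]. split; auto.
      + rewrite track_len_app. simpl. ring. }
  destruct Hshort as [Ts [Hts Hlts]].
  pose proof (dist_le_track_len' x Ts y Hts Vx).
  assert (Rabs (b' - a) <= Rabs (b - a) + Rabs (b' - b) - 2 * m).
  { destruct (Rlt_le_dec 0 (b - a)) as [Hp|Hp].
    - assert (b' - b < 0) by nra. split_Rabs; lra.
    - assert (b - a < 0) by lra. assert (b' - b > 0) by nra. split_Rabs; lra. }
  rewrite track_len_app in E1. cbn [track_len] in E1, E2. lra.
Qed.

Lemma near_segment_track x y z eps : valid_point G x -> valid_point G y -> valid_point G z ->
  x <> z -> z <> y -> in_segment G x y z -> 0 < eps ->
  eps < Rmin (Rmin (dist G x z) (dist G z y)) (Rmin min_len (star_radius z)) ->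
  exists T1 T2, track x T1 z /\ T1 <> nil /\ track x (T1 ++ T2) y /\ no_backtrack (T1 ++ T2) /\
    dist G x z <= track_len T1 < dist G x z + eps /\
    dist G z y <= track_len T2 < dist G z y + eps.
Proof.
  intros Vx Vy Vz Hxz Hzy Hsg He Hem.
  set (m := Rmin (Rmin (dist G x z) (dist G z y)) (Rmin min_len (star_radius z))) in *.
  pose proof (Rmin_l (Rmin (dist G x z) (dist G z y)) (Rmin min_len (star_radius z))).
  pose proof (Rmin_r (Rmin (dist G x z) (dist G z y)) (Rmin min_len (star_radius z))).
  pose proof (Rmin_l (dist G x z) (dist G z y)). pose proof (Rmin_r (dist G x z) (dist G z y)).
  pose proof (Rmin_l min_len (star_radius z)). pose proof (Rmin_r min_len (star_radius z)).
  destruct (near_optimal_track x z eps Vx Vz Hxz He) as [T1 [A1 [B1 [C1 [D1 E1]]]]].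
  destruct (near_optimal_track z y eps Vz Vy Hzy He) as [T2 [A2 [B2 [C2 [D2 E2]]]]].
  exists T1, T2.
  destruct (exists_last D1) as [T1a [[[e a] b] EqT1]].
  destruct T2 as [|[[e' a'] b'] T2b]; [congruence|].
  assert (M1 : m <= Rabs (b - a)).
  { subst T1. pose proof (last_margin x T1a e a b z A1 C1).
    assert (m <= Rmin (dist G x z) (Rmin min_len (star_radius z)))
      by (unfold m; apply Rmin_glb; [|apply Rmin_glb]; lra). lra. }
  assert (M2 : m <= Rabs (b' - a')).
  { pose proof (first_margin z e' a' b' T2b y A2 C2).
    assert (m <= Rmin (dist G z y) (Rmin min_len (star_radius z)))
      by (unfold m; apply Rmin_glb; [|apply Rmin_glb]; lra). lra. }
  subst T1.
  assert (Hj : e <> e' \/ (b - a) * (b' - a') > 0)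
    by (apply (junction_no_backtrack x z y T1a e a b e' a' b' T2b m eps);
        auto; [apply E1|apply E2]).
  split; [auto|split; [auto|split; [eapply track_app; eauto|split]]].
  - rewrite <- app_assoc. simpl. apply no_backtrack_app; auto.
  - lra.
Qed.

Lemma track_through_vertex x T y s0 v : track x T y -> no_backtrack T -> T <> nil ->
  0 < s0 < track_len T -> track_pos T s0 = PV v ->
  exists d e1 s1 t1 e2 s2 t2, 0 < d /\ d <= s0 /\ d <= track_len T - s0 /\
    e1 <> e2 /\ (v < nV G)%nat /\
    (e1 < nE G)%nat /\ 0 <= t1 <= len G e1 /\ pt G e1 t1 = PV v /\ (s1 = 1 \/ s1 = -1) /\
    (e2 < nE G)%nat /\ 0 <= t2 <= len G e2 /\ pt G e2 t2 = PV v /\ (s2 = 1 \/ s2 = -1) /\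
    (forall r, 0 <= r <= d -> track_pos T (s0 - r) = pt G e1 (t1 + s1 * r) /\
                             0 <= t1 + s1 * r <= len G e1) /\
    (forall r, 0 <= r <= d -> track_pos T (s0 + r) = pt G e2 (t2 + s2 * r) /\
                             0 <= t2 + s2 * r <= len G e2).
Proof.
  intros Ht Hnb Hn Hs0 Ev.
  destruct (track_local_chart T x y Ht Hnb Hn s0 ltac:(lra)) as
    [d [e1 [s1 [t1 [e2 [s2 [t2 [Hd [He1 [He2 [Hs1 [Hs2
     [P1 [P2 [Left [Right [Nb Jn]]]]]]]]]]]]]]]]].
  destruct (track_pos_dist x T y Ht Hn s0 ltac:(lra)) as [V0 _].
  set (L := track_len T) in *.
  destruct (Left s0 ltac:(lra) ltac:(lra)) as [_ R0].
  rewrite Rminus_diag, Rmult_0_r, Rminus_0_r in R0.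
  destruct (Right s0 ltac:(lra) ltac:(lra)) as [_ R0'].
  rewrite Rminus_diag, Rmult_0_r, Rplus_0_r in R0'.
  set (h := Rmin d (Rmin s0 (L - s0)) / 2).
  pose proof (Rmin_l d (Rmin s0 (L - s0))). pose proof (Rmin_r d (Rmin s0 (L - s0))).
  pose proof (Rmin_l s0 (L - s0)). pose proof (Rmin_r s0 (L - s0)).
  assert (0 < Rmin d (Rmin s0 (L - s0))) by (repeat apply Rmin_glb_lt; lra).
  assert (Hh : 0 < h /\ h <= d /\ h <= s0 /\ h <= L - s0) by (unfold h; lra).
  exists h, e1, (- s1), t1, e2, s2, t2.
  split; [lra|split; [lra|split; [lra|split; [|split; [rewrite Ev in V0; exact V0|]]]]].
  - intro E. subst e2. specialize (Nb Hs0 eq_refl). subst s2.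
    assert (t2 = t1) by (apply (pt_inj e1); auto; congruence). subst t2.
    destruct (Left (s0 - h) ltac:(lra) ltac:(lra)) as [_ Q1].
    destruct (Right (s0 + h) ltac:(lra) ltac:(lra)) as [_ Q2].
    replace (s0 - (s0 - h)) with h in Q1 by ring. replace (s0 + h - s0) with h in Q2 by ring.
    apply (pt_vertex_one_sided e1 t1 v s1 h); auto; try congruence; lra.
  - assert (Hs1' : - s1 = 1 \/ - s1 = -1) by (destruct Hs1 as [-> | ->]; [right|left]; ring).
    repeat (split; [solve [auto | congruence]|]). split.
    + intros r Hr. destruct (Left (s0 - r) ltac:(lra) ltac:(lra)) as [Q Q'].
      replace (t1 - s1 * (s0 - (s0 - r))) with (t1 + - s1 * r) in Q, Q' by ring. auto.
    + intros r Hr. destruct (Right (s0 + r) ltac:(lra) ltac:(lra)) as [Q Q'].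
      replace (s0 + r - s0) with r in Q, Q' by ring. auto.
Qed.

Lemma track_along_edge x T y s0 e t : track x T y -> no_backtrack T -> T <> nil ->
  0 < s0 < track_len T -> track_pos T s0 = PE e t ->
  exists d sg, 0 < d /\ (sg = 1 \/ sg = -1) /\ (e < nE G)%nat /\ 0 < t - d /\ t + d < len G e /\
    forall r, Rabs (r - t) < d ->
      0 <= s0 + sg * (r - t) <= track_len T /\ track_pos T (s0 + sg * (r - t)) = PE e r.
Proof.
  intros Ht Hnb Hn Hs0 Ev.
  destruct (track_local_chart T x y Ht Hnb Hn s0 ltac:(lra)) as
    [d [e1 [s1 [t1 [e2 [s2 [t2 [Hd [He1 [He2 [Hs1 [Hs2
     [P1 [P2 [Left [Right [Nb Jn]]]]]]]]]]]]]]]]].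
  set (L := track_len T) in *.
  destruct (Left s0 ltac:(lra) ltac:(lra)) as [_ R0].
  rewrite Rminus_diag, Rmult_0_r, Rminus_0_r in R0.
  destruct (Right s0 ltac:(lra) ltac:(lra)) as [_ R0'].
  rewrite Rminus_diag, Rmult_0_r, Rplus_0_r in R0'.
  destruct (pt_eq_PE e1 t1 e t He1 R0 ltac:(congruence)) as [<- [<- Ht1]].
  destruct (pt_eq_PE e2 t2 e t He2 R0' ltac:(congruence)) as [<- [<- _]].
  specialize (Nb Hs0 eq_refl). subst s2.
  set (m := Rmin (Rmin d (Rmin s0 (L - s0))) (Rmin t (len G e - t))).
  pose proof (Rmin_l (Rmin d (Rmin s0 (L - s0))) (Rmin t (len G e - t))).
  pose proof (Rmin_r (Rmin d (Rmin s0 (L - s0))) (Rmin t (len G e - t))).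
  pose proof (Rmin_l d (Rmin s0 (L - s0))). pose proof (Rmin_r d (Rmin s0 (L - s0))).
  pose proof (Rmin_l s0 (L - s0)). pose proof (Rmin_r s0 (L - s0)).
  pose proof (Rmin_l t (len G e - t)). pose proof (Rmin_r t (len G e - t)).
  assert (0 < m) by (repeat apply Rmin_glb_lt; lra).
  exists (m / 2), s1.
  split; [lra|split; [auto|split; [auto|split; [unfold m in *; lra|split; [unfold m in *; lra|]]]]].
  intros r Hr.
  assert (Hss : Rabs (s0 + s1 * (r - t) - s0) = Rabs (r - t)).
  { replace (s0 + s1 * (r - t) - s0) with (s1 * (r - t)) by ring.
    rewrite Rabs_mult. destruct Hs1 as [-> | ->]; split_Rabs; lra. }
  assert (HsL : 0 <= s0 + s1 * (r - t) <= L) by (split_Rabs; unfold m in *; lra).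
  split; [auto|].
  rewrite (chart_two_sided T L s0 d e t s1 Left Right) by (unfold m in *; lra).
  rewrite <- (pt_in e r) by (unfold m in *; split_Rabs; lra). f_equal.
  replace (t + s1 * (s0 + s1 * (r - t) - s0)) with (t + (s1 * s1) * (r - t)) by ring.
  destruct Hs1 as [-> | ->]; ring.
Qed.

(** * Viscosity sub-solutions are convex *)

Section Viscosity.
Variable u : point -> R.
Hypothesis Hvisc : viscosity_subsolution G u.

Lemma usc_edge_bounded e : (e < nE G)%nat -> exists M, forall t, 0 <= t <= len G e ->
  u (pt G e t) <= M.
Proof.
  intros He. pose proof (len_pos e He).
  apply usc_on_bounded; [lra|].
  intros t Ht eps Heps. destruct Hvisc as [Husc _].
  destruct (Husc (pt G e t) (pt_valid e t He Ht) eps Heps) as [d [Hd Hu]].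
  exists d. split; auto. intros s' Hs' Hd'. apply Hu. apply pt_valid; auto.
  rewrite dist_pt_pt by auto. rewrite Rabs_minus_sym. auto.
Qed.

(* A quadratic bound along [e] near the end [v] extends, with a larger curvature,
   to a C^1 test function on the whole edge, using that [u] is bounded above there. *)
Lemma vertex_test_function e v t0 sgm d F0 beta C : (e < nE G)%nat -> 0 <= t0 <= len G e ->
  pt G e t0 = PV v -> 0 < d -> (sgm = 1 \/ sgm = -1) ->
  (forall r, 0 <= r <= d -> 0 <= t0 + sgm * r <= len G e) ->
  (forall r, 0 <= r <= d -> u (pt G e (t0 + sgm * r)) <= F0 + beta * r + C * r ^ 2) ->
  F0 = u (PV v) ->
  incident G v e /\ exists phi phi1, C1_on_closed 0 (len G e) phi phi1 /\
    phi (vcoord G v e) = u (PV v) /\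
    (forall t, 0 <= t <= len G e -> u (pt G e t) <= phi t) /\ ingoing_deriv G v e phi1 = beta.
Proof.
  intros He Ht0 Hv Hd Hs Hco Hb HF.
  destruct (edge_wf e He) as [_ [_ [Hne Hl]]].
  destruct (usc_edge_bounded e He) as [M HM].
  pose proof (Hco d ltac:(lra)) as Hcod.
  assert (Hcase : (t0 = 0 /\ src G e = v /\ sgm = 1) \/ (t0 = len G e /\ tgt G e = v /\ sgm = -1)).
  { destruct (pt_eq_PV e t0 v He Ht0 Hv) as [[-> E]|[-> E]]; [left|right];
      (split; [auto|split; [auto|]]); destruct Hs as [->| ->]; lra. }
  assert (Hrange : forall r, 0 <= r <= len G e -> 0 <= t0 + sgm * r <= len G e)
    by (intros r Hr; destruct Hcase as [[-> [_ ->]]|[-> [_ ->]]]; lra).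
  destruct (quad_bound_extend (fun r => u (pt G e (t0 + sgm * r))) (len G e) d F0 beta C M Hd)
    as [C' HC']; [intros r Hr; apply HM, Hrange; auto|exact Hb|].
  split; [split; auto; destruct Hcase as [[_ [E _]]|[_ [E _]]]; auto|].
  exists (fun t => F0 + (beta * sgm) * (t - t0) + C' * (t - t0) ^ 2).
  exists (fun t => beta * sgm + 2 * C' * (t - t0)).
  split; [|split; [|split]].
  - intros t Ht. split; [apply is_derive_quad|].
    apply (ex_derive_continuous (fun t => beta * sgm + 2 * C' * (t - t0))). auto_derive. auto.
  - unfold vcoord. destruct Hcase as [[-> [E ->]]|[-> [E ->]]].
    + destruct Nat.eq_dec; [|congruence]. rewrite HF. ring.
    + destruct Nat.eq_dec; [congruence|]. rewrite HF. ring.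
  - intros t Ht.
    set (r := sgm * (t - t0)).
    assert (Hr : 0 <= r <= len G e) by (unfold r; destruct Hcase as [[-> [_ ->]]|[-> [_ ->]]]; lra).
    assert (Ht' : t = t0 + sgm * r) by (unfold r; destruct Hs as [-> | ->]; ring).
    specialize (HC' r Hr). simpl in HC'. rewrite <- Ht' in HC'.
    eapply Rle_trans; [exact HC'|right].
    unfold r. destruct Hs as [-> | ->]; ring.
  - unfold ingoing_deriv. destruct Hcase as [[-> [E ->]]|[-> [E ->]]].
    + destruct Nat.eq_dec; [|congruence]. ring.
    + destruct Nat.eq_dec; [congruence|]. ring.
Qed.

Lemma track_corner_test x T y s0 v : track x T y -> no_backtrack T -> T <> nil ->
  0 < s0 < track_len T -> track_pos T s0 = PV v ->
  corner_test (fun s => u (track_pos T s)) (track_len T) s0.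
Proof.
  intros Ht Hnb Hn Hs0 Ev. destruct Hvisc as [_ [_ Hvert]].
  destruct (track_through_vertex x T y s0 v Ht Hnb Hn Hs0 Ev)
    as [d [e1 [s1
        [t1 [e2 [s2
            [t2 [Hd [Hds0
                [HdL [Hne [Vv
                    [He1 [R1 [Ev1 [Hs1 [He2 [R2 [Ev2 [Hs2 [Left Right]]]]]]]]]]]]]]]]]]]]].
  set (L := track_len T) in *.
  intros C bL bR HR HLb. rewrite Ev in HR, HLb.
  destruct (vertex_test_function e1 v t1 s1 d (u (PV v)) bL C He1 R1 Ev1 Hd Hs1)
    as [Hi1 [phie [phie1 [A1 [B1 [C1 D1]]]]]]; [apply Left| |auto|].
  { intros r Hr. destruct (Left r Hr) as [Q _]. rewrite <- Q.
    specialize (HLb (s0 - r) ltac:(lra)).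
    replace (s0 - (s0 - r)) with r in HLb by ring.
    replace ((s0 - r - s0) ^ 2) with (r ^ 2) in HLb by ring. exact HLb. }
  destruct (vertex_test_function e2 v t2 s2 d (u (PV v)) bR C He2 R2 Ev2 Hd Hs2)
    as [Hi2 [phif [phif1 [A2 [B2 [C2 D2]]]]]]; [apply Right| |auto|].
  { intros r Hr. destruct (Right r Hr) as [Q _]. rewrite <- Q.
    specialize (HR (s0 + r) ltac:(lra)).
    replace (s0 + r - s0) with r in HR by ring. exact HR. }
  rewrite <- D1, <- D2.
  assert (Hiv : interior_vertex G v) by (split; auto; exists e1, e2; auto).
  apply (Hvert v e1 e2 Hiv Hi1 Hi2 Hne phie phie1 phif phif1); auto.
Qed.

Lemma track_touch_test x T y s0 e t : track x T y -> no_backtrack T -> T <> nil ->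
  0 < s0 < track_len T -> track_pos T s0 = PE e t ->
  touch_test (fun s => u (track_pos T s)) (track_len T) s0.
Proof.
  intros Ht Hnb Hn Hs0 Ev. destruct Hvisc as [_ [Hedv _]].
  destruct (track_along_edge x T y s0 e t Ht Hnb Hn Hs0 Ev)
    as [d [sg [Hd [Hsg [He [Htd [Htd' Hpar]]]]]]].
  intros C beta Hb. rewrite Ev in Hb.
  (* in the edge coordinate the quadratic bound is a C^2 test function touching at [t] *)
  assert (H2C : 0 <= 2 * C); [|lra].
  apply (Hedv e t d He ltac:(lra) Hd ltac:(lra) ltac:(lra)
    (fun r => u (PE e t) + (beta * sg) * (r - t) + C * (r - t) ^ 2)
    (fun r => beta * sg + 2 * C * (r - t)) (fun _ => 2 * C)).
  - intros r _. split; [apply is_derive_quad|split].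
    + auto_derive; [auto|ring].
    + apply continuous_const.
  - ring.
  - intros r Hr. destruct (Hpar r ltac:(split_Rabs; lra)) as [HsL Hpt].
    specialize (Hb _ HsL). rewrite Hpt in Hb.
    eapply Rle_trans; [exact Hb|right].
    replace (s0 + sg * (r - t) - s0) with (sg * (r - t)) by ring.
    destruct Hsg as [-> | ->]; ring.
Qed.

Lemma track_convex x T y : track x T y -> no_backtrack T -> T <> nil ->
  forall s, 0 <= s <= track_len T ->
  u (track_pos T s) <= (1 - s / track_len T) * u x + (s / track_len T) * u y.
Proof.
  intros Ht Hnb Hn s Hs.
  rewrite <- (track_pos_0 x T y Ht Hn), <- (track_pos_end x T y Ht Hn).
  apply (chord_bound_of_tests (fun s => u (track_pos T s)) (track_len T) (joints T)); auto.
  - apply (track_len_pos x T y); auto.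
  - apply Forall_forall. intros z Hz. apply (joints_range x T y Ht z Hz).
  - apply (track_usc u x T y); auto. apply Hvisc.
  - intros s0 Hs0. destruct (track_pos T s0) as [v|e t] eqn:Ev.
    + right.
      split; [apply (track_vertex_is_joint x T y s0 v)|apply (track_corner_test x T y s0 v)]; auto.
    + left. apply (track_touch_test x T y s0 e t); auto.
Qed.

Lemma convex_near_segment x y z eps : valid_point G x -> valid_point G y -> valid_point G z ->
  x <> z -> z <> y -> in_segment G x y z -> 0 < eps ->
  eps < Rmin (Rmin (dist G x z) (dist G z y)) (Rmin min_len (star_radius z)) ->
  exists L1 L2, dist G x z <= L1 < dist G x z + eps /\ dist G z y <= L2 < dist G z y + eps /\
    u z <= (1 - L1 / (L1 + L2)) * u x + (L1 / (L1 + L2)) * u y.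
Proof.
  intros Vx Vy Vz Hxz Hzy Hsg He Hem.
  destruct (near_segment_track x y z eps Vx Vy Vz Hxz Hzy Hsg He Hem)
    as [T1 [T2 [A1 [Hn1 [A [Hnb [HL1 HL2]]]]]]].
  exists (track_len T1), (track_len T2). split; [auto|split; [auto|]].
  assert (Hn : T1 ++ T2 <> nil) by (destruct T1; simpl; congruence).
  pose proof (track_len_nonneg T1). pose proof (track_len_nonneg T2).
  pose proof (track_convex x _ y A Hnb Hn (track_len T1)) as K.
  rewrite track_len_app in K. specialize (K ltac:(lra)).
  rewrite (track_pos_app _ _ x z A1 Hn1), (track_pos_end x _ z A1 Hn1) in K
    by (split; [apply track_len_nonneg|apply Rle_refl]).
  exact K.
Qed.

Lemma viscosity_convex : convex_on_graph G u.
Proof.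
  intros x y z Vx Vy Vz Hxy Hsg.
  pose proof (dist_pos x y Vx Vy Hxy) as HD.
  pose proof Hsg as Hsg'. unfold in_segment in Hsg'.
  rewrite (dist_sym y z).
  destruct (classic (x = z)) as [<-|Hxz].
  { rewrite dist_self by auto. right. field. lra. }
  destruct (classic (z = y)) as [->|Hzy].
  { rewrite dist_self by auto. right. field. lra. }
  rewrite <- Hsg'.
  apply (le_chord_of_approx (u x) (u y) (u z) _ _
           (Rmin (Rmin (dist G x z) (dist G z y)) (Rmin min_len (star_radius z))));
    try (apply dist_pos; auto).
  - repeat apply Rmin_glb_lt; try apply dist_pos; auto;
      [apply min_len_pos|apply star_radius_pos; auto].
  - intros eps He Hem. apply convex_near_segment; auto.
Qed.

End Viscosity.

End MetricGraph.

Theorem theorem2p1 (G : graph_data) (u : point -> R) :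
  is_metric_graph G ->
  (convex_on_graph G u <-> viscosity_subsolution G u).
Proof.
  intros HG. split.
  - intros Hc. exact (convex_viscosity G HG u Hc).
  - intros Hv. exact (viscosity_convex G HG u Hv).
Qed.
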